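(* Let $f\in\mathbb{C}\{x,y,z\}$, $f=f_m+f_{m+1}+\cdots$ its decomposition into homogeneous parts with $f_m\neq0$, $V=\{f=0\}$ defined on a small neighbourhood $U$ of $0\in\mathbb{C}^3$, $\mathbf{C}=V(f_m)\subset\mathbb{P}^2$, and assume $\operatorname{Sing}(\mathbf{C})\cap V(f_{m+1})=\emptyset$ in $\mathbb{P}^2$. Let $\pi_0:\widehat U\to U$ be the blow-up at the origin with exceptional divisor $E_0\cong\mathbb{P}^2$ and let $\widehat V$ be the strict transform of $V$, so that $\widehat V\cap E_0$ is identified with $\mathbf{C}$. Let $P\in\mathbf{C}$. Then $\widehat V$ is smooth in a neighbourhood of $P$. Moreover, $\widehat V$ and $E_0$ intersect transversely at $P$ if and only if $P$ is a smooth point of $\mathbf{C}$; otherwise, i.e. if $P\in\operatorname{Sing}(\mathbf{C})$, there exist local analytic coordinates $(x,y,z)$ around $P$ in which $E_0=\{z=0\}$ and $\widehat V=\{z+h(x,y)=0\}$, where $h(x,y)=0$ is a local equation of $\mathbf{C}$ at $P$ and $h$ has order at least $2$. *)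

From Stdlib Require Import Reals.
From Coquelicot Require Import Coquelicot.

Definition CC : Type := Complex.C.
Definition C3 : Type := (CC * CC * CC)%type.
Definition c0 : CC := RtoC 0.
Definition origin : C3 := (c0, c0, c0).

Definition p1 (w : C3) : CC := fst (fst w).
Definition p2 (w : C3) : CC := snd (fst w).
Definition p3 (w : C3) : CC := snd w.

Local Open Scope C_scope.

Definition coeffs : Type := nat -> nat -> nat -> CC.

Definition hom (a : coeffs) (k : nat) (w : C3) : CC :=
  sum_n (fun i => sum_n (fun j =>
     a i j (k - i - j)%nat * pow_n (p1 w) i * pow_n (p2 w) j
       * pow_n (p3 w) (k - i - j)%nat) (k - i)%nat) k.

Definition hom_dx (a : coeffs) (k : nat) (w : C3) : CC :=
  sum_n (fun i => sum_n (fun j =>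
     RtoC (INR i) * a i j (k - i - j)%nat * pow_n (p1 w) (i - 1)%nat * pow_n (p2 w) j
       * pow_n (p3 w) (k - i - j)%nat) (k - i)%nat) k.
Definition hom_dy (a : coeffs) (k : nat) (w : C3) : CC :=
  sum_n (fun i => sum_n (fun j =>
     RtoC (INR j) * a i j (k - i - j)%nat * pow_n (p1 w) i * pow_n (p2 w) (j - 1)%nat
       * pow_n (p3 w) (k - i - j)%nat) (k - i)%nat) k.
Definition hom_dz (a : coeffs) (k : nat) (w : C3) : CC :=
  sum_n (fun i => sum_n (fun j =>
     RtoC (INR (k - i - j)) * a i j (k - i - j)%nat * pow_n (p1 w) i * pow_n (p2 w) j
       * pow_n (p3 w) (k - i - j - 1)%nat) (k - i)%nat) k.

Definition convergent (a : coeffs) : Prop :=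
  exists r : R, (0 < r)%R /\
    ex_series (fun k => (sum_n (fun i => sum_n (fun j =>
        Cmod (a i j (k - i - j)%nat)) (k - i)%nat) k * r ^ k)%R).

Definition order_is (a : coeffs) (m : nat) : Prop :=
  (forall i j l, (i + j + l < m)%nat -> a i j l = c0) /\
  (exists i j l, (i + j + l = m)%nat /\ a i j l <> c0).

(* w (nonzero, a homogeneous representative) is a singular point of the
   projective curve V(f_m) *)
Definition sing_pt (a : coeffs) (m : nat) (w : C3) : Prop :=
  hom a m w = c0 /\ hom_dx a m w = c0 /\ hom_dy a m w = c0 /\ hom_dz a m w = c0.

Definition near3 (e : R) (c w : C3) : Prop :=
  (Cmod (p1 w - p1 c) < e /\ Cmod (p2 w - p2 c) < e /\ Cmod (p3 w - p3 c) < e)%R.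
Definition near2 (e : R) (c w : CC * CC) : Prop :=
  (Cmod (fst w - fst c) < e /\ Cmod (snd w - snd c) < e)%R.

Definition open3 (D : C3 -> Prop) : Prop :=
  forall w, D w -> exists e : R, (0 < e)%R /\ forall w', near3 e w w' -> D w'.
Definition open2 (D : CC * CC -> Prop) : Prop :=
  forall w, D w -> exists e : R, (0 < e)%R /\ forall w', near2 e w w' -> D w'.

Definition pd1 (F : C3 -> CC) (w : C3) (l : CC) : Prop :=
  is_derive (fun s : CC => F (s, p2 w, p3 w)) (p1 w) l.
Definition pd2 (F : C3 -> CC) (w : C3) (l : CC) : Prop :=
  is_derive (fun s : CC => F (p1 w, s, p3 w)) (p2 w) l.
Definition pd3 (F : C3 -> CC) (w : C3) (l : CC) : Prop :=
  is_derive (fun s : CC => F (p1 w, p2 w, s)) (p3 w) l.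
Definition grad3 (F : C3 -> CC) (w : C3) (l : C3) : Prop :=
  pd1 F w (p1 l) /\ pd2 F w (p2 l) /\ pd3 F w (p3 l).

Definition qd1 (h : CC * CC -> CC) (w : CC * CC) (l : CC) : Prop :=
  is_derive (fun s : CC => h (s, snd w)) (fst w) l.
Definition qd2 (h : CC * CC -> CC) (w : CC * CC) (l : CC) : Prop :=
  is_derive (fun s : CC => h (fst w, s)) (snd w) l.

(* holomorphic on an open set (Osgood: continuous + separately holomorphic) *)
Definition holo3 (F : C3 -> CC) (D : C3 -> Prop) : Prop :=
  open3 D /\
  (forall w, D w -> forall e : R, (0 < e)%R -> exists d : R, (0 < d)%R /\
      forall w', near3 d w w' -> (Cmod (F w' - F w) < e)%R) /\
  (forall w, D w -> exists l1 l2 l3, pd1 F w l1 /\ pd2 F w l2 /\ pd3 F w l3).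
Definition holo2 (h : CC * CC -> CC) (D : CC * CC -> Prop) : Prop :=
  open2 D /\
  (forall w, D w -> forall e : R, (0 < e)%R -> exists d : R, (0 < d)%R /\
      forall w', near2 d w w' -> (Cmod (h w' - h w) < e)%R) /\
  (forall w, D w -> exists l1 l2, qd1 h w l1 /\ qd2 h w l2).

Definition det3 (u v w : C3) : CC :=
  p1 u * (p2 v * p3 w - p3 v * p2 w)
  - p2 u * (p1 v * p3 w - p3 v * p1 w)
  + p3 u * (p1 v * p2 w - p2 v * p1 w).

(* Given a basis (q, b1, b2) of C^3, the chart (u,v,t) of the blow-up of C^3
   at 0 is  (u,v,t) |-> ( t*(q + u b1 + v b2) , [q + u b1 + v b2] ).
   In it E_0 = {t = 0}, the point P = [q] of E_0 is the chart origin,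
   and E_0 is identified with the affine chart (u,v) |-> [q + u b1 + v b2]. *)
Definition chartpt (q b1 b2 : C3) (u v : CC) : C3 :=
  (p1 q + u * p1 b1 + v * p1 b2,
   p2 q + u * p2 b1 + v * p2 b2,
   p3 q + u * p3 b1 + v * p3 b2).

(* G is, near the chart origin, the equation of the strict transform:
   f(t*p) = t^m * G(u,v,t) with  G(u,v,t) = sum_k t^k f_{m+k}(p),
   p = q + u b1 + v b2. *)
Definition strict_transform_eq (a : coeffs) (m : nat) (q b1 b2 : C3)
    (G : C3 -> CC) : Prop :=
  exists r : R, (0 < r)%R /\ forall u v t,
    (Cmod u < r)%R -> (Cmod v < r)%R -> (Cmod t < r)%R ->
    is_series (fun k => pow_n t k * hom a (m + k) (chartpt q b1 b2 u v))
              (G (u, v, t)).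

Definition smooth_near_origin (G : C3 -> CC) : Prop :=
  exists e : R, (0 < e)%R /\ forall w, near3 e origin w -> G w = c0 ->
    exists l, grad3 G w l /\ l <> origin.

(* V^ = {G=0} and E_0 = {t=0} meet transversally at P: dG(P) and dt are
   linearly independent *)
Definition transverse_at_origin (G : C3 -> CC) : Prop :=
  exists l, grad3 G origin l /\
    forall al be : CC,
      al * p1 l = c0 -> al * p2 l = c0 -> al * p3 l + be = c0 ->
      al = c0 /\ be = c0.

(* existence of local analytic coordinates Phi = (x,y,z) around P (P |-> 0)
   with E_0 = {z = 0}, V^ = {z + h(x,y) = 0}, h a local equation of the
   curve C (in E_0) at P, and ord h >= 2 *)
Definition good_coordinates (a : coeffs) (m : nat) (q b1 b2 : C3)
    (G : C3 -> CC) : Prop :=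
  exists (W : C3 -> Prop) (f1 f2 f3 : C3 -> CC) (h : CC * CC -> CC)
         (D2 : CC * CC -> Prop) (e : C3 -> CC) (J1 J2 J3 : C3),
    W origin /\
    holo3 f1 W /\ holo3 f2 W /\ holo3 f3 W /\
    (forall w w', W w -> W w' ->
        (f1 w, f2 w, f3 w) = (f1 w', f2 w', f3 w') -> w = w') /\
    grad3 f1 origin J1 /\ grad3 f2 origin J2 /\ grad3 f3 origin J3 /\
    det3 J1 J2 J3 <> c0 /\
    f1 origin = c0 /\ f2 origin = c0 /\ f3 origin = c0 /\
    (forall w, W w -> (p3 w = c0 <-> f3 w = c0)) /\
    holo2 h D2 /\ (forall w, W w -> D2 (f1 w, f2 w)) /\
    (forall w, W w -> (G w = c0 <-> f3 w + h (f1 w, f2 w) = c0)) /\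
    (* h(x,y) = 0 is a local equation of C at P: on E_0, h = unit * f_m *)
    holo3 e W /\ (forall w, W w -> e w <> c0) /\
    (forall w, W w -> p3 w = c0 ->
        h (f1 w, f2 w) = e w * hom a m (chartpt q b1 b2 (p1 w) (p2 w))) /\
    (* ord h >= 2 *)
    h (c0, c0) = c0 /\ qd1 h (c0, c0) c0 /\ qd2 h (c0, c0) c0.

(* In the chart (u, v, t) of the blow-up centred at [P = [q]] the strict transform is
   G(u, v, t) = sum_k t^k f_(m+k)(q + u b1 + v b2), so [G(u, v, 0) = f_m(q + u b1 + v b2)]
   is the equation of C in E_0 = {t = 0}, while at P the partial derivatives of G are the
   derivatives of f_m along b1 and b2 and dG/dt = f_(m+1)(q).  If P is a smooth point of C,
   Euler's identity q . grad f_m(q) = m f_m(q) = 0 and the independence of q, b1, b2 force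
   one of the first two to be nonzero, which gives smoothness and transversality.  If P is
   singular they vanish, but f_(m+1)(q) <> 0 by hypothesis, so G is injective in t near P
   and (u, v, G - G|_(t=0)) are coordinates in which E_0 = {z = 0} and the strict transform
   is {z + h = 0} with h = G|_(t=0).  The analysis behind all this is a uniform first-order
   expansion of G in each variable, obtained by differentiating the series termwise against
   a geometric majorant. *)

From Stdlib Require Import Reals Lra Lia Psatz Classical.
From Coquelicot Require Import Coquelicot.

Open Scope R_scope.

Lemma plus_Cplus (x y : C) : plus x y = (x + y)%C.
Proof. reflexivity. Qed.

Lemma mult_Cmult (x y : C) : mult x y = (x * y)%C.
Proof. reflexivity. Qed.

Lemma Cplus_0_r_eq (x y : C) : (x + 0 = y + 0)%C -> x = y.
Proof. rewrite !Cplus_0_r. exact (fun H => H). Qed.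

(* [ring] infers its carrier from the left-hand side, which may have the alias type [CC];
   adding [0] makes both sides syntactically of type [C]. *)
Ltac cring :=
  try change (@plus C_AbelianMonoid) with Cplus;
  try change (@plus (AbelianGroup.AbelianMonoid C_AbelianGroup)) with Cplus;
  try change (@mult C_Ring) with Cmult;
  rewrite ?plus_Cplus, ?mult_Cmult;
  try unfold c0;
  apply Cplus_0_r_eq; ring.

Lemma Csub_r_inj (x y z : C) : (x - z)%C = (y - z)%C -> x = y.
Proof. intros H. replace x with (x - z + z)%C by ring. rewrite H. ring. Qed.

Lemma Csub_diag (x : C) : (x - x)%C = c0.
Proof. unfold c0. ring. Qed.

Lemma Csub_eq_c0 (x y : C) : (x - y)%C = c0 -> x = y.
Proof. intros H. apply (Csub_r_inj _ _ y). rewrite H. unfold c0. ring. Qed.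

Lemma Cmod_mult_le (a b : C) (A B : R) :
  Cmod a <= A -> Cmod b <= B -> Cmod (a * b)%C <= A * B.
Proof. intros. rewrite Cmod_mult. apply Rmult_le_compat; auto using Cmod_ge_0. Qed.

Lemma Cmod_plus_le (a b : C) (A B : R) :
  Cmod a <= A -> Cmod b <= B -> Cmod (a + b)%C <= A + B.
Proof. intros. eapply Rle_trans; [apply Cmod_triangle | lra]. Qed.

Lemma Cmod_le_nonneg (a : C) (A : R) : Cmod a <= A -> 0 <= A.
Proof. intros. eapply Rle_trans; [apply Cmod_ge_0 | eassumption]. Qed.

Lemma Cmod_pow_n (t : C) k : Cmod (pow_n t k) = Cmod t ^ k.
Proof.
  induction k as [|k IH]; [apply Cmod_1|].
  change (pow_n t (S k)) with (t * pow_n t k)%C. rewrite Cmod_mult, IH. reflexivity.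
Qed.

Lemma Cmod_c0 : Cmod c0 = 0.
Proof. apply Cmod_0. Qed.

Lemma Cmod_sub_c0 (x : C) : Cmod (x - c0)%C = Cmod x.
Proof. f_equal. unfold c0. ring. Qed.

Lemma Cmod_c0_sub (x : C) : Cmod (c0 - x)%C = Cmod x.
Proof. rewrite <- Cmod_opp. f_equal. unfold c0. ring. Qed.

Lemma Cmod_lt_shift (x y : C) r : Cmod x + Cmod (y - x)%C < r -> Cmod y < r.
Proof.
  intros H. replace y with (x + (y - x))%C by ring.
  eapply Rle_lt_trans; [apply Cmod_triangle | exact H].
Qed.

Lemma Rmult_le_of_le_div x b c : 0 < c -> x <= b / c -> x * c <= b.
Proof.
  intros Hc Hx. replace b with (b / c * c) by (field; lra).
  apply Rmult_le_compat_r; lra.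
Qed.

Lemma Cmult_eq_c0_r (a x : C) : a <> c0 -> (a * x)%C = c0 -> x = c0.
Proof.
  intros Ha E. destruct (Ceq_dec x c0) as [|Hx]; auto. exfalso. exact (Cmult_neq_0 a x Ha Hx E).
Qed.

Lemma C3_eq (x y z x' y' z' : CC) :
  x = x' -> y = y' -> z = z' -> (x, y, z) = (x', y', z') :> C3.
Proof. intros; subst; reflexivity. Qed.

Lemma C3_eq_inv (x y z x' y' z' : CC) :
  (x, y, z) = (x', y', z') :> C3 -> x = x' /\ y = y' /\ z = z'.
Proof.
  intros E. repeat split;
    [exact (f_equal (fun w : C3 => p1 w) E) | exact (f_equal (fun w : C3 => p2 w) E)
    | exact (f_equal (fun w : C3 => p3 w) E)].
Qed.

(** * First-order expansions with multiplicative error bounds *)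

(* [F0], [Fh] are the values of a function at [0] and [h], [F1] its derivative at [0],
   and [r] measures [h]; writing the error terms as [(g - 1) * M] makes the bound stable
   under products, where [M] and [g] multiply. *)
Definition taylor1_bound (h F0 F1 Fh : C) (M g r : R) : Prop :=
  Cmod F0 <= M /\ Cmod Fh <= M /\ Cmod (Fh - F0)%C <= (g - 1) * M * r /\
  Cmod (Fh - F0 - h * F1)%C <= (g - 1) * M * (r * r).

Section Taylor1Bound.

Variables (h : C) (r : R).
Hypothesis r_ge0 : 0 <= r.

Lemma taylor1_bound_mul F0 F1 Fh M g G0 G1 Gh N g' :
  1 <= g -> 1 <= g' ->
  taylor1_bound h F0 F1 Fh M g r -> taylor1_bound h G0 G1 Gh N g' r ->
  taylor1_bound h (F0 * G0) (F1 * G0 + F0 * G1) (Fh * Gh) (M * N) (g * g') r.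
Proof.
  intros Hg Hg' [A1 [A2 [A3 A4]]] [B1 [B2 [B3 B4]]].
  assert (HM := Cmod_le_nonneg _ _ A1). assert (HN := Cmod_le_nonneg _ _ B1).
  split; [|split; [|split]]; try (apply Cmod_mult_le; assumption).
  - replace (Fh * Gh - F0 * G0)%C with ((Fh - F0) * Gh + F0 * (Gh - G0))%C by ring.
    eapply Rle_trans; [apply Cmod_plus_le; apply Cmod_mult_le; eassumption|].
    assert (0 <= (g - 1) * (g' - 1) * (M * N * r)) by
      (repeat apply Rmult_le_pos; lra).
    nra.
  - replace (Fh * Gh - F0 * G0 - h * (F1 * G0 + F0 * G1))%C with
      ((Fh - F0 - h * F1) * G0 + F0 * (Gh - G0 - h * G1) + (Fh - F0) * (Gh - G0))%C by ring.
    eapply Rle_trans.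
    { apply Cmod_plus_le; [apply Cmod_plus_le|]; apply Cmod_mult_le; eassumption. }
    right; ring.
Qed.

Lemma taylor1_bound_add F0 F1 Fh M G0 G1 Gh N g :
  taylor1_bound h F0 F1 Fh M g r -> taylor1_bound h G0 G1 Gh N g r ->
  taylor1_bound h (F0 + G0) (F1 + G1) (Fh + Gh) (M + N) g r.
Proof.
  intros [A1 [A2 [A3 A4]]] [B1 [B2 [B3 B4]]].
  split; [|split; [|split]]; try (apply Cmod_plus_le; assumption).
  - replace (Fh + Gh - (F0 + G0))%C with ((Fh - F0) + (Gh - G0))%C by ring.
    eapply Rle_trans; [apply Cmod_plus_le; eassumption | right; ring].
  - replace (Fh + Gh - (F0 + G0) - h * (F1 + G1))%C with
      ((Fh - F0 - h * F1) + (Gh - G0 - h * G1))%C by ring.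
    eapply Rle_trans; [apply Cmod_plus_le; eassumption | right; ring].
Qed.

Lemma taylor1_bound_scal c F0 F1 Fh M g :
  1 <= g -> taylor1_bound h F0 F1 Fh M g r ->
  taylor1_bound h (c * F0) (c * F1) (c * Fh) (Cmod c * M) g r.
Proof.
  intros Hg [A1 [A2 [A3 A4]]].
  assert (Hc := Cmod_ge_0 c).
  split; [|split; [|split]]; try (apply Cmod_mult_le; lra).
  - replace (c * Fh - c * F0)%C with (c * (Fh - F0))%C by ring.
    eapply Rle_trans; [apply Cmod_mult_le; [apply Rle_refl | eassumption] | right; ring].
  - replace (c * Fh - c * F0 - h * (c * F1))%C with (c * (Fh - F0 - h * F1))%C by ring.
    eapply Rle_trans; [apply Cmod_mult_le; [apply Rle_refl | eassumption] | right; ring].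
Qed.

Lemma taylor1_bound_sum (F0 F1 Fh : nat -> C) (M : nat -> R) g n :
  (forall i, (i <= n)%nat -> taylor1_bound h (F0 i) (F1 i) (Fh i) (M i) g r) ->
  taylor1_bound h (sum_n F0 n) (sum_n F1 n) (sum_n Fh n) (sum_n M n) g r.
Proof.
  induction n as [|n IH]; intros H.
  - rewrite !sum_O. apply H; lia.
  - rewrite !sum_Sn. apply taylor1_bound_add; [apply IH; auto | apply H; lia].
Qed.

Lemma taylor1_bound_affine x b M g L :
  Cmod x <= M -> Cmod (x + h * b)%C <= M -> Cmod b <= L -> L * Cmod h <= (g - 1) * M * r ->
  taylor1_bound h x b (x + h * b) M g r.
Proof.
  intros Hx Hxh Hb HL. assert (HM := Cmod_le_nonneg _ _ Hx).
  split; [|split; [|split]]; auto.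
  - replace (x + h * b - x)%C with (b * h)%C by ring. rewrite Cmod_mult.
    eapply Rle_trans; [|exact HL]. apply Rmult_le_compat_r; auto using Cmod_ge_0.
  - replace (x + h * b - x - h * b)%C with (RtoC 0) by ring. rewrite Cmod_0.
    assert (0 <= (g - 1) * M * r).
    { eapply Rle_trans; [|exact HL]. apply Rmult_le_pos; eauto using Cmod_le_nonneg, Cmod_ge_0. }
    nra.
Qed.

Lemma taylor1_bound_pow F0 F1 Fh M g k :
  1 <= g -> taylor1_bound h F0 F1 Fh M g r ->
  taylor1_bound h (pow_n F0 k) (RtoC (INR k) * pow_n F0 (k - 1) * F1) (pow_n Fh k)
    (M ^ k) (g ^ k) r.
Proof.
  intros Hg HF. induction k as [|k IH].
  - change (pow_n ?x 0) with (RtoC 1). change (INR 0) with 0. simpl (_ ^ 0).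
    unfold taylor1_bound.
    replace (RtoC 1 - RtoC 1 - h * (RtoC 0 * pow_n F0 (0 - 1) * F1))%C with (RtoC 0) by ring.
    replace (RtoC 1 - RtoC 1)%C with (RtoC 0) by ring.
    rewrite Cmod_0, Cmod_1. repeat split; lra.
  - change (pow_n ?x (S k)) with (x * pow_n x k)%C. simpl (_ ^ S k).
    assert (HP := taylor1_bound_mul _ _ _ _ _ _ _ _ _ _ Hg (pow_R1_Rle g k Hg) HF IH).
    destruct HP as [A1 [A2 [A3 A4]]]. split; [|split; [|split]]; auto.
    replace (RtoC (INR (S k)) * pow_n F0 (S k - 1) * F1)%C with
      (F1 * pow_n F0 k + F0 * (RtoC (INR k) * pow_n F0 (k - 1) * F1))%C; auto.
    destruct k as [|k]; [simpl; ring|].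
    replace (S (S k) - 1)%nat with (S k) by lia. replace (S k - 1)%nat with k by lia.
    change (pow_n F0 (S k)) with (F0 * pow_n F0 k)%C.
    rewrite (S_INR (S k)), RtoC_plus. ring.
Qed.

End Taylor1Bound.

Lemma taylor1_bound_increments h F0 F1 Fh M g x c :
  taylor1_bound h F0 F1 Fh M g x -> 0 <= x -> (g - 1) * M <= c ->
  Cmod (Fh - F0)%C <= c * x /\ Cmod (Fh - F0 - h * F1)%C <= c * (x * x).
Proof.
  intros (_ & _ & A & B) Hx Hc. split.
  - eapply Rle_trans; [exact A | apply Rmult_le_compat_r; lra].
  - eapply Rle_trans; [exact B | apply Rmult_le_compat_r; nra].
Qed.

(** * Homogeneous polynomials *)

Definition coords_le (M : R) (p : C3) : Prop :=
  Cmod (p1 p) <= M /\ Cmod (p2 p) <= M /\ Cmod (p3 p) <= M.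

Definition shift3 (p : C3) (h : C) (b : C3) : C3 :=
  (p1 p + h * p1 b, p2 p + h * p2 b, p3 p + h * p3 b)%C.

Definition mono (i j l : nat) (p : C3) : C :=
  (pow_n (p1 p) i * pow_n (p2 p) j * pow_n (p3 p) l)%C.

(* The derivative of [mono i j l] at [p] in the direction [b], in the shape produced by
   [taylor1_bound_mul]. *)
Definition dmono (i j l : nat) (p b : C3) : C :=
  (((RtoC (INR i) * pow_n (p1 p) (i - 1) * p1 b) * pow_n (p2 p) j
    + pow_n (p1 p) i * (RtoC (INR j) * pow_n (p2 p) (j - 1) * p2 b)) * pow_n (p3 p) l
   + (pow_n (p1 p) i * pow_n (p2 p) j) * (RtoC (INR l) * pow_n (p3 p) (l - 1) * p3 b))%C.

Definition coef_mass (a : coeffs) (n : nat) : R :=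
  sum_n (fun i => sum_n (fun j => Cmod (a i j (n - i - j)%nat)) (n - i)) n.

Definition dhom (a : coeffs) (n : nat) (p b : C3) : C :=
  sum_n (fun i => sum_n (fun j => a i j (n - i - j)%nat * dmono i j (n - i - j) p b) (n - i))%C n.

Lemma hom_mono a n p :
  hom a n p = sum_n (fun i => sum_n (fun j => a i j (n - i - j)%nat * mono i j (n - i - j) p)
                                    (n - i))%C n.
Proof.
  unfold hom, mono. apply sum_n_ext; intro i. apply sum_n_ext; intro j. cring.
Qed.

Lemma sum_n_nonneg (u : nat -> R) n : (forall k, 0 <= u k) -> 0 <= sum_n u n.
Proof.
  intros H. induction n as [|n IH]; [rewrite sum_O; auto|].
  rewrite sum_Sn. specialize (H (S n)). change (plus ?x ?y) with (x + y). lra.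
Qed.

Lemma coef_mass_ge0 a n : 0 <= coef_mass a n.
Proof. apply sum_n_nonneg; intro. apply sum_n_nonneg; intro. apply Cmod_ge_0. Qed.

Lemma sum_n_Rmult_r (u : nat -> R) (c : R) n : sum_n u n * c = sum_n (fun k => u k * c) n.
Proof. symmetry. apply (sum_n_mult_r (K := R_Ring)). Qed.

Lemma sum_n_Cmult_l (u : nat -> C) (c : C) n : (c * sum_n u n)%C = sum_n (fun k => c * u k)%C n.
Proof. symmetry. apply (sum_n_mult_l (K := C_Ring)). Qed.

Section HomogeneousExpansion.

Variables (h : C) (r g M L : R) (p b : C3).
Hypotheses (r_ge0 : 0 <= r) (g_ge1 : 1 <= g).
Hypotheses (p_le : coords_le M p) (ph_le : coords_le M (shift3 p h b)) (b_le : coords_le L b)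
           (step_le : L * Cmod h <= (g - 1) * M * r).

Lemma taylor1_bound_mono i j l :
  taylor1_bound h (mono i j l p) (dmono i j l p b) (mono i j l (shift3 p h b))
    (M ^ (i + j + l)) (g ^ (i + j + l)) r.
Proof.
  destruct p_le as [A1 [A2 A3]], ph_le as [B1 [B2 B3]], b_le as [C1 [C2 C3]].
  assert (H1 := taylor1_bound_pow h r r_ge0 _ _ _ _ _ i g_ge1
                  (taylor1_bound_affine h r r_ge0 _ (p1 b) M g L A1 B1 C1 step_le)).
  assert (H2 := taylor1_bound_pow h r r_ge0 _ _ _ _ _ j g_ge1
                  (taylor1_bound_affine h r r_ge0 _ (p2 b) M g L A2 B2 C2 step_le)).
  assert (H3 := taylor1_bound_pow h r r_ge0 _ _ _ _ _ l g_ge1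
                  (taylor1_bound_affine h r r_ge0 _ (p3 b) M g L A3 B3 C3 step_le)).
  assert (Hi := pow_R1_Rle g i g_ge1). assert (Hj := pow_R1_Rle g j g_ge1).
  assert (H12 := taylor1_bound_mul h r r_ge0 _ _ _ _ _ _ _ _ _ _ Hi Hj H1 H2).
  assert (Hij : 1 <= g ^ i * g ^ j) by nra.
  assert (H123 := taylor1_bound_mul h r r_ge0 _ _ _ _ _ _ _ _ _ _
                    Hij (pow_R1_Rle g l g_ge1) H12 H3).
  rewrite !pow_add. exact H123.
Qed.

Lemma taylor1_bound_hom a n :
  taylor1_bound h (hom a n p) (dhom a n p b) (hom a n (shift3 p h b))
    (coef_mass a n * M ^ n) (g ^ n) r.
Proof.
  assert (E : coef_mass a n * M ^ n = sum_n (fun i => sum_n (fun j =>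
                Cmod (a i j (n - i - j)%nat) * M ^ (i + j + (n - i - j))) (n - i)) n).
  { unfold coef_mass. rewrite sum_n_Rmult_r. apply sum_n_ext_loc; intros i Hi.
    rewrite sum_n_Rmult_r. apply sum_n_ext_loc; intros j Hj.
    replace (i + j + (n - i - j))%nat with n by lia. reflexivity. }
  rewrite E, !hom_mono. unfold dhom.
  apply taylor1_bound_sum; intros i Hi. apply taylor1_bound_sum; intros j Hj.
  apply taylor1_bound_scal; [apply pow_R1_Rle, g_ge1|].
  replace (g ^ n) with (g ^ (i + j + (n - i - j))) by (f_equal; lia).
  apply taylor1_bound_mono.
Qed.

End HomogeneousExpansion.

Lemma hom_bound a n p M : coords_le M p -> Cmod (hom a n p) <= coef_mass a n * M ^ n.
Proof.
  intros Hp.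
  assert (E : shift3 p (RtoC 0) p = p).
  { destruct p as [[x y] z]. unfold shift3, p1, p2, p3; simpl. apply C3_eq; cring. }
  assert (Hstep : M * Cmod (RtoC 0) <= (1 - 1) * M * 0) by (rewrite Cmod_0; lra).
  assert (Hp' : coords_le M (shift3 p (RtoC 0) p)) by (rewrite E; exact Hp).
  destruct (taylor1_bound_hom (RtoC 0) 0 1 M M p p (Rle_refl 0) (Rle_refl 1) Hp Hp' Hp Hstep a n)
    as [Hb _].
  exact Hb.
Qed.

Lemma sum_n_lin3 (u v w : nat -> C) (x y z : C) n :
  sum_n (fun k => x * u k + y * v k + z * w k)%C n =
  (x * sum_n u n + y * sum_n v n + z * sum_n w n)%C.
Proof.
  induction n as [|n IH]; [rewrite !sum_O; reflexivity|].
  rewrite !sum_Sn, IH. cring.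
Qed.

Lemma dhom_grad a n p b :
  dhom a n p b = (p1 b * hom_dx a n p + p2 b * hom_dy a n p + p3 b * hom_dz a n p)%C.
Proof.
  unfold dhom, hom_dx, hom_dy, hom_dz.
  rewrite <- sum_n_lin3. apply sum_n_ext; intro i.
  rewrite <- sum_n_lin3. apply sum_n_ext; intro j.
  unfold dmono. cring.
Qed.

Lemma euler_hom a n p : dhom a n p p = (RtoC (INR n) * hom a n p)%C.
Proof.
  assert (Hpow : forall (x : C) i,
             (RtoC (INR i) * pow_n x (i - 1) * x)%C = (RtoC (INR i) * pow_n x i)%C).
  { intros x [|i]; [simpl; ring|].
    replace (S i - 1)%nat with i by lia. change (pow_n x (S i)) with (x * pow_n x i)%C. ring. }
  rewrite hom_mono. unfold dhom. rewrite sum_n_Cmult_l.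
  apply sum_n_ext_loc; intros i Hi. rewrite sum_n_Cmult_l.
  apply sum_n_ext_loc; intros j Hj.
  unfold dmono, mono. set (l := (n - i - j)%nat).
  replace (INR n) with (INR i + INR j + INR l) by (rewrite <- !plus_INR; f_equal; unfold l; lia).
  rewrite !RtoC_plus.
  transitivity (a i j l *
    ((RtoC (INR i) * pow_n (p1 p) (i - 1) * p1 p) * pow_n (p2 p) j * pow_n (p3 p) l
     + pow_n (p1 p) i * (RtoC (INR j) * pow_n (p2 p) (j - 1) * p2 p) * pow_n (p3 p) l
     + pow_n (p1 p) i * pow_n (p2 p) j * (RtoC (INR l) * pow_n (p3 p) (l - 1) * p3 p)))%C.
  { cring. }
  rewrite !Hpow. cring.
Qed.

Lemma is_series_C_unique (y : nat -> C) (Y Y' : C) : is_series y Y -> is_series y Y' -> Y = Y'.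
Proof.
  apply (filterlim_locally_unique (F := eventually)
           (FF := Proper_StrongProper _ eventually_filter)).
Qed.

Lemma is_series_le_Cmod (y : nat -> C) (z : nat -> R) (Y : C) (Z : R) :
  is_series y Y -> is_series z Z -> (forall k, Cmod (y k) <= z k) -> Cmod Y <= Z.
Proof.
  intros HY HZ H.
  assert (Hle := filterlim_le (F := eventually) (FF := Proper_StrongProper _ eventually_filter)
                   (fun n => norm (sum_n y n)) (sum_n z) (norm Y) Z).
  simpl in Hle. apply Hle; auto.
  - exists 0%nat. intros n _. induction n as [|n IH]; [rewrite !sum_O; apply H|].
    rewrite !sum_Sn. eapply Rle_trans; [apply Cmod_triangle | apply Rplus_le_compat; auto].
  - eapply filterlim_comp; [exact HY | apply filterlim_norm].
Qed.

Lemma is_series_ge0 (c : nat -> R) (Cs : R) : is_series c Cs -> (forall k, 0 <= c k) -> 0 <= Cs.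
Proof.
  intros H Hc.
  assert (Hle := filterlim_le (F := eventually) (FF := Proper_StrongProper _ eventually_filter)
                   (fun _ => 0) (sum_n c) 0 Cs).
  simpl in Hle. apply Hle; auto.
  - exists 0%nat. intros n _. apply sum_n_nonneg, Hc.
  - apply filterlim_const.
Qed.

Lemma is_series_pow0 (x : nat -> C) : is_series (fun k => pow_n (RtoC 0) k * x k)%C (x 0%nat).
Proof.
  unfold is_series. eapply filterlim_ext_loc; [|apply filterlim_const].
  exists 0%nat. intros n _. induction n as [|n IH].
  { rewrite sum_O. change (pow_n _ 0) with (RtoC 1). cring. }
  rewrite sum_Sn, <- IH by lia. change (pow_n _ (S n)) with (RtoC 0 * pow_n (RtoC 0) n)%C. cring.
Qed.

Lemma is_series_dpow0 (x : nat -> C) :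
  is_series (fun k => RtoC (INR k) * pow_n (RtoC 0) (k - 1) * x k)%C (x 1%nat).
Proof.
  unfold is_series. eapply filterlim_ext_loc; [|apply filterlim_const].
  exists 1%nat. intros n Hn. induction n as [|[|n] IH]; [lia| |].
  - rewrite sum_Sn, sum_O. change (INR 0) with 0. change (INR 1) with 1. simpl (_ - _)%nat.
    change (pow_n ?z 0) with (RtoC 1). cring.
  - rewrite sum_Sn, <- IH by lia. replace (S (S n) - 1)%nat with (S n) by lia.
    change (pow_n _ (S n)) with (RtoC 0 * pow_n (RtoC 0) n)%C. cring.
Qed.

Lemma ex_series_geom_le (c : nat -> R) (C0 q : R) :
  0 <= q < 1 -> (forall k, 0 <= c k <= C0 * q ^ k) -> ex_series c.
Proof.
  intros Hq H.
  apply (ex_series_le (K := R_AbsRing) (V := R_CompleteNormedModule) c (fun k => C0 * q ^ k)).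
  - intro k. change (norm (c k)) with (Rabs (c k)). rewrite Rabs_pos_eq; apply H.
  - apply (ex_series_scal_l (V := R_NormedModule)), ex_series_geom. rewrite Rabs_pos_eq; lra.
Qed.

Lemma sum_n_ge_term (u : nat -> R) n k :
  (forall k, 0 <= u k) -> (k <= n)%nat -> u k <= sum_n u n.
Proof.
  intros H Hk. induction n as [|n IH].
  - replace k with 0%nat by lia. rewrite sum_O. lra.
  - rewrite sum_Sn. change (plus ?x ?y) with (x + y).
    destruct (Nat.eq_dec k (S n)) as [->|Hne].
    + assert (0 <= sum_n u n) by (apply sum_n_nonneg; auto). lra.
    + assert (u k <= sum_n u n) by (apply IH; lia). specialize (H (S n)). lra.
Qed.

Lemma convergent_coef_mass_bound a :
  convergent a -> exists R0 B, 0 < R0 /\ forall n, coef_mass a n * R0 ^ n <= B.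
Proof.
  intros [R0 [HR0 Hs]]. exists R0.
  set (u := fun n => coef_mass a n * R0 ^ n).
  assert (Hu : forall n, 0 <= u n) by
    (intro n; apply Rmult_le_pos; [apply coef_mass_ge0 | apply pow_le; lra]).
  apply ex_series_lim_0, is_lim_seq_spec in Hs.
  destruct (Hs (mkposreal 1 Rlt_0_1)) as [N HN].
  exists (sum_n u N + 1). split; auto. intro n. change (u n <= sum_n u N + 1).
  assert (0 <= sum_n u N) by (apply sum_n_nonneg; auto).
  destruct (Compare_dec.le_lt_dec n N) as [Hn|Hn].
  - assert (u n <= sum_n u N) by (apply sum_n_ge_term; auto). lra.
  - specialize (HN n ltac:(lia)). change (Rabs (u n - 0) < 1) in HN.
    apply Rabs_lt_between in HN. lra.
Qed.

Section TermwiseIncrements.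

Variables (T0 Th D : nat -> C) (c : nat -> R) (h : C) (x : R).
Hypothesis term_bounds : forall k,
  Cmod (Th k - T0 k)%C <= c k * x /\ Cmod (Th k - T0 k - h * D k)%C <= c k * (x * x).

Lemma ex_series_termwise_derivative :
  h <> RtoC 0 -> 0 <= x -> ex_series c -> exists Dsum, is_series D Dsum.
Proof.
  intros Hh Hx Hc.
  assert (Hm : 0 < Cmod h) by (apply Cmod_gt_0; auto).
  destruct (ex_series_le (K := C_AbsRing) (V := C_CompleteNormedModule) D
              (fun k => c k * ((x + x * x) / Cmod h))) as [l Hl].
  - intro k. change (norm (D k)) with (Cmod (D k)). destruct (term_bounds k) as [A B].
    replace (D k) with (/ h * ((Th k - T0 k) - (Th k - T0 k - h * D k)))%C
      by (field; exact Hh).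
    rewrite Cmod_mult, Cmod_inv by exact Hh.
    assert (Cmod ((Th k - T0 k) - (Th k - T0 k - h * D k))%C <= c k * x + c k * (x * x)).
    { unfold Cminus at 1. eapply Rle_trans; [apply Cmod_triangle|]. rewrite Cmod_opp. lra. }
    replace (c k * ((x + x * x) / Cmod h)) with ((c k * x + c k * (x * x)) * / Cmod h)
      by (field; lra).
    rewrite Rmult_comm. apply Rmult_le_compat_r; [apply Rlt_le, Rinv_0_lt_compat|]; lra.
  - apply ex_series_scal_r, Hc.
  - exists l. exact Hl.
Qed.

Lemma is_series_increment_bounds X0 Xh Dsum Cs :
  is_series T0 X0 -> is_series Th Xh -> is_series D Dsum -> is_series c Cs ->
  Cmod (Xh - X0)%C <= Cs * x /\ Cmod (Xh - X0 - h * Dsum)%C <= Cs * (x * x).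
Proof.
  intros H0 Hh HD Hc.
  assert (Hdiff := is_series_minus Th T0 Xh X0 Hh H0).
  split.
  - apply (is_series_le_Cmod (fun k => Th k - T0 k)%C (fun k => c k * x)); auto.
    + apply (is_series_scal_r x c Cs Hc).
    + intro k; apply term_bounds.
  - apply (is_series_le_Cmod (fun k => Th k - T0 k - h * D k)%C (fun k => c k * (x * x))).
    + apply (is_series_minus _ _ _ _ Hdiff (is_series_scal h D Dsum HD)).
    + apply (is_series_scal_r (x * x) c Cs Hc).
    + intro k; apply term_bounds.
Qed.

End TermwiseIncrements.

Definition first_order_at (f : C -> C) (x l : C) (r K : R) : Prop :=
  forall h, Cmod h <= r ->
    Cmod (f (x + h) - f x)%C <= K * Cmod h /\
    Cmod (f (x + h) - f x - h * l)%C <= K * (Cmod h * Cmod h).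

Lemma is_derive_quadratic_remainder (f : C -> C) x l r K :
  0 < r -> 0 <= K ->
  (forall h, Cmod h <= r -> Cmod (f (x + h) - f x - h * l)%C <= K * (Cmod h * Cmod h)) ->
  is_derive f x l.
Proof.
  intros Hr HK H. split; [apply is_linear_scal_l|].
  intros x' Hx'.
  apply (is_filter_lim_locally_unique (K := C_AbsRing) (V := AbsRing_NormedModule C_AbsRing))
    in Hx'.
  subst x'. intros eps.
  assert (He : 0 < Rmin r (eps / (K + 1))).
  { apply Rmin_pos; auto. apply Rdiv_lt_0_compat; [apply cond_pos | lra]. }
  exists (mkposreal _ He). intros y Hy.
  change (Cmod (y - x)%C < Rmin r (eps / (K + 1))) in Hy.
  change (Cmod (f y - f x - (y - x) * l)%C <= eps * Cmod (y - x)%C).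
  set (h := (y - x)%C) in *. replace y with (x + h)%C by (unfold h; ring).
  assert (Hh1 := Rmin_l r (eps / (K + 1))).
  assert (Hhe := Rmult_le_of_le_div (Cmod h) eps (K + 1) ltac:(lra)
                   (Rlt_le _ _ (Rlt_le_trans _ _ _ Hy (Rmin_r _ _)))).
  eapply Rle_trans; [apply H; lra|].
  assert (Hc := Cmod_ge_0 h). assert (He0 := cond_pos eps). nra.
Qed.

Lemma first_order_at_is_derive f x l r K :
  0 < r -> 0 <= K -> first_order_at f x l r K -> is_derive f x l.
Proof.
  intros Hr HK H. apply (is_derive_quadratic_remainder f x l r K Hr HK). intros h Hh. apply H, Hh.
Qed.

Lemma is_derive_affine (f : C -> C) x l :
  (forall h, f (x + h)%C = (f x + h * l)%C) -> is_derive f x l.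
Proof.
  intros H. apply (is_derive_quadratic_remainder f x l 1 0 Rlt_0_1 (Rle_refl 0)). intros h _.
  rewrite H. replace (f x + h * l - f x - h * l)%C with (RtoC 0) by ring.
  rewrite Cmod_0, Rmult_0_l. apply Rle_refl.
Qed.

Lemma is_derive_C_minus (f g : C -> C) x lf lg :
  is_derive f x lf -> is_derive g x lg -> is_derive (fun s => f s - g s)%C x (lf - lg)%C.
Proof. exact (is_derive_minus f g x lf lg). Qed.

Lemma first_order_at_injective f x l r K h :
  first_order_at f x l r K -> Cmod h <= r -> K * Cmod h < Cmod l -> f (x + h)%C = f x -> h = c0.
Proof.
  intros Hf Hh HK E. destruct (Ceq_dec h c0) as [|Hne]; auto. exfalso.
  assert (Hpos : 0 < Cmod h) by (apply Cmod_gt_0; exact Hne).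
  destruct (Hf h Hh) as [_ R]. rewrite E in R.
  replace (f x - f x - h * l)%C with (- (h * l))%C in R by ring.
  rewrite Cmod_opp, Cmod_mult in R.
  assert (Cmod l <= K * Cmod h) by (apply (Rmult_le_reg_l (Cmod h)); nra).
  lra.
Qed.

Lemma first_order_at_of_series (F : C -> C) (T : C -> nat -> C) (D : nat -> C) (c : nat -> R)
    (x : C) (rho Cs : R) :
  0 < rho -> is_series c Cs -> (forall k, 0 <= c k) ->
  (forall h, Cmod h <= rho -> is_series (T (x + h)%C) (F (x + h)%C)) ->
  is_series (T x) (F x) ->
  (forall h, Cmod h <= rho -> forall k,
     Cmod (T (x + h)%C k - T x k)%C <= c k * (Cmod h / rho) /\
     Cmod (T (x + h)%C k - T x k - h * D k)%C <= c k * ((Cmod h / rho) * (Cmod h / rho))) ->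
  exists l, is_series D l /\ first_order_at F x l rho (Cs / rho + Cs / (rho * rho)).
Proof.
  intros Hrho HCs Hc0 HT HT0 Hterm.
  assert (HCs0 := is_series_ge0 c Cs HCs Hc0).
  assert (Hrho' : Cmod (RtoC rho) = rho) by (rewrite Cmod_R; apply Rabs_pos_eq; lra).
  (* Summability of the derivatives follows from the bounds at the single step [h = rho]. *)
  destruct (ex_series_termwise_derivative (T x) (T (x + RtoC rho)%C) D c (RtoC rho)
              (Cmod (RtoC rho) / rho) (Hterm (RtoC rho) ltac:(lra))) as [l Hl].
  { intro E. apply RtoC_inj in E. lra. }
  { apply Rmult_le_pos; [apply Cmod_ge_0 | apply Rlt_le, Rinv_0_lt_compat; lra]. }
  { exists Cs. exact HCs. }
  exists l. split; [exact Hl|]. intros h Hh.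
  destruct (is_series_increment_bounds (T x) (T (x + h)%C) D c h (Cmod h / rho)
              (Hterm h Hh) _ _ _ _ HT0 (HT h Hh) Hl HCs) as [A1 A2].
  assert (Hh0 := Cmod_ge_0 h).
  assert (E1 : Cs * (Cmod h / rho) = Cs / rho * Cmod h) by (field; lra).
  assert (E2 : Cs * ((Cmod h / rho) * (Cmod h / rho)) = Cs / (rho * rho) * (Cmod h * Cmod h))
    by (field; lra).
  assert (0 <= Cs / rho) by (apply Rmult_le_pos; [lra | apply Rlt_le, Rinv_0_lt_compat; lra]).
  assert (0 <= Cs / (rho * rho))
    by (apply Rmult_le_pos; [lra | apply Rlt_le, Rinv_0_lt_compat; nra]).
  split; nra.
Qed.

Inductive axis : Type := ax1 | ax2 | ax3.

Definition coord (i : axis) (w : C3) : CC :=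
  match i with ax1 => p1 w | ax2 => p2 w | ax3 => p3 w end.

Definition set_coord (i : axis) (w : C3) (s : CC) : C3 :=
  match i with
  | ax1 => (s, p2 w, p3 w)
  | ax2 => (p1 w, s, p3 w)
  | ax3 => (p1 w, p2 w, s)
  end.

Definition pd (i : axis) (F : C3 -> CC) (w : C3) (l : CC) : Prop :=
  is_derive (fun s => F (set_coord i w s)) (coord i w) l.

Definition polydisc (r : R) (w : C3) : Prop :=
  Cmod (p1 w) < r /\ Cmod (p2 w) < r /\ Cmod (p3 w) < r.

Definition disc2 (r : R) (z : CC * CC) : Prop := Cmod (fst z) < r /\ Cmod (snd z) < r.

Definition dist3 (w w' : C3) : R :=
  Cmod (p1 w' - p1 w)%C + Cmod (p2 w' - p2 w)%C + Cmod (p3 w' - p3 w)%C.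

Lemma grad3_pd F w l : grad3 F w l <-> forall i, pd i F w (coord i l).
Proof.
  split.
  - intros (H1 & H2 & H3) []; assumption.
  - intros H. exact (conj (H ax1) (conj (H ax2) (H ax3))).
Qed.

Lemma grad3_unique F w l l' : grad3 F w l -> grad3 F w l' -> l = l'.
Proof.
  intros (A1 & A2 & A3) (B1 & B2 & B3).
  apply is_C_derive_unique in A1, A2, A3, B1, B2, B3.
  destruct l as [[x y] z], l' as [[x' y'] z']. unfold p1, p2, p3 in *; simpl in *.
  apply C3_eq; congruence.
Qed.

Lemma set_coord_coord i w : set_coord i w (coord i w) = w.
Proof. destruct i, w as [[x y] z]; reflexivity. Qed.

Lemma polydisc_coord r w i : polydisc r w -> Cmod (coord i w) < r.
Proof. intros (H1 & H2 & H3). destruct i; assumption. Qed.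

Lemma polydisc_set_coord r w i s : polydisc r w -> Cmod s < r -> polydisc r (set_coord i w s).
Proof. intros (H1 & H2 & H3) Hs. destruct i; repeat split; assumption. Qed.

Lemma polydisc_pos r w : polydisc r w -> 0 < r.
Proof. intros (H1 & _). assert (H0 := Cmod_ge_0 (p1 w)). lra. Qed.

Lemma polydisc_le r r' w : r <= r' -> polydisc r w -> polydisc r' w.
Proof. intros Hr (H1 & H2 & H3). repeat split; lra. Qed.

Lemma polydisc_origin r : 0 < r -> polydisc r origin.
Proof. intros Hr. unfold polydisc, origin, p1, p2, p3; simpl. rewrite Cmod_c0. lra. Qed.

Lemma near3_origin_polydisc e w : near3 e origin w -> polydisc e w.
Proof.
  unfold near3, polydisc, origin, p1, p2, p3. simpl. rewrite !Cmod_sub_c0. tauto.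
Qed.

Lemma dist3_origin_le e w : polydisc e w -> dist3 origin w <= 3 * e.
Proof.
  intros (H1 & H2 & H3). unfold dist3, origin, p1, p2, p3 in *; simpl in *.
  rewrite !Cmod_sub_c0. lra.
Qed.

Lemma dist3_set_coord_shift i w w' h :
  dist3 (set_coord i w (coord i w + h)%C) (set_coord i w' (coord i w' + h)%C) = dist3 w w'.
Proof.
  assert (E : forall x x' : C, (x' + h - (x + h))%C = (x' - x)%C) by (intros; ring).
  destruct i; unfold dist3; cbn [set_coord coord p1 p2 p3 fst snd]; rewrite E; reflexivity.
Qed.

Lemma open3_polydisc r : open3 (polydisc r).
Proof.
  intros w (H1 & H2 & H3).
  set (e := Rmin (r - Cmod (p1 w)) (Rmin (r - Cmod (p2 w)) (r - Cmod (p3 w)))).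
  assert (E1 := Rmin_l (r - Cmod (p1 w)) (Rmin (r - Cmod (p2 w)) (r - Cmod (p3 w)))).
  assert (E2 := Rmin_r (r - Cmod (p1 w)) (Rmin (r - Cmod (p2 w)) (r - Cmod (p3 w)))).
  assert (E3 := Rmin_l (r - Cmod (p2 w)) (r - Cmod (p3 w))).
  assert (E4 := Rmin_r (r - Cmod (p2 w)) (r - Cmod (p3 w))).
  exists e. split; [repeat apply Rmin_pos; lra|].
  intros w' (A1 & A2 & A3). fold e in E1, E2.
  split; [|split]; [apply (Cmod_lt_shift (p1 w)) | apply (Cmod_lt_shift (p2 w))
                  | apply (Cmod_lt_shift (p3 w))]; lra.
Qed.

Lemma open2_disc2 r : open2 (disc2 r).
Proof.
  intros z (H1 & H2).
  set (e := Rmin (r - Cmod (fst z)) (r - Cmod (snd z))).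
  assert (E1 := Rmin_l (r - Cmod (fst z)) (r - Cmod (snd z))).
  assert (E2 := Rmin_r (r - Cmod (fst z)) (r - Cmod (snd z))).
  exists e. split; [apply Rmin_pos; lra|].
  intros z' (A1 & A2). fold e in E1, E2.
  split; [apply (Cmod_lt_shift (fst z)) | apply (Cmod_lt_shift (snd z))]; lra.
Qed.

Lemma dist3_ge0 w w' : 0 <= dist3 w w'.
Proof.
  unfold dist3. assert (H1 := Cmod_ge_0 (p1 w' - p1 w)%C).
  assert (H2 := Cmod_ge_0 (p2 w' - p2 w)%C). assert (H3 := Cmod_ge_0 (p3 w' - p3 w)%C). lra.
Qed.

Lemma holo3_of_lipschitz (F : C3 -> CC) r L :
  0 <= L ->
  (forall w w', polydisc r w -> polydisc r w' -> Cmod (F w' - F w)%C <= L * dist3 w w') ->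
  (forall w, polydisc r w -> forall i, exists l, pd i F w l) ->
  holo3 F (polydisc r).
Proof.
  intros HL Hlip Hpd. split; [apply open3_polydisc | split].
  - intros w Hw eps Heps.
    destruct (open3_polydisc r w Hw) as [e [He Hnear]].
    set (d := Rmin e (eps / (3 * L + 1))).
    assert (Hde : d <= e) by apply Rmin_l.
    assert (Hdeps := Rmult_le_of_le_div d eps (3 * L + 1) ltac:(lra) (Rmin_r _ _)).
    exists d. split; [apply Rmin_pos; [lra | apply Rdiv_lt_0_compat; lra]|].
    intros w' Hw'.
    assert (Hw'r : polydisc r w') by (apply Hnear; destruct Hw' as (? & ? & ?); repeat split; lra).
    assert (Hdist : dist3 w w' < 3 * d) by (destruct Hw' as (? & ? & ?); unfold dist3; lra).
    eapply Rle_lt_trans; [apply Hlip; auto|].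
    assert (H0 := dist3_ge0 w w'). nra.
  - intros w Hw.
    destruct (Hpd w Hw ax1) as [l1 H1], (Hpd w Hw ax2) as [l2 H2], (Hpd w Hw ax3) as [l3 H3].
    exists l1, l2, l3. auto.
Qed.

Lemma holo3_polydisc_le F r r' : r' <= r -> holo3 F (polydisc r) -> holo3 F (polydisc r').
Proof.
  intros Hr (_ & Hc & Hd). split; [apply open3_polydisc|].
  split; intros w Hw; [apply Hc | apply Hd]; eapply polydisc_le; eauto.
Qed.

Lemma grad3_const (c : CC) w : grad3 (fun _ => c) w (RtoC 0, RtoC 0, RtoC 0).
Proof. split; [|split]; apply is_derive_affine; intros; cbn [p1 p2 p3 fst snd]; cring. Qed.

Lemma grad3_p1 w : grad3 p1 w (RtoC 1, RtoC 0, RtoC 0).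
Proof. split; [|split]; apply is_derive_affine; intros; cbn [p1 p2 p3 fst snd]; cring. Qed.

Lemma grad3_p2 w : grad3 p2 w (RtoC 0, RtoC 1, RtoC 0).
Proof. split; [|split]; apply is_derive_affine; intros; cbn [p1 p2 p3 fst snd]; cring. Qed.

Lemma holo3_const r (c : CC) : holo3 (fun _ => c) (polydisc r).
Proof.
  apply (holo3_of_lipschitz _ r 0 (Rle_refl 0)).
  - intros w w' _ _. rewrite Csub_diag, Cmod_c0. lra.
  - intros w _ i. eexists. apply grad3_pd, grad3_const.
Qed.

Lemma holo3_p1 r : holo3 p1 (polydisc r).
Proof.
  apply (holo3_of_lipschitz _ r 1 Rle_0_1).
  - intros w w' _ _. assert (H := dist3_ge0 w w'). unfold dist3 in *.
    assert (Cmod (p2 w' - p2 w)%C + Cmod (p3 w' - p3 w)%C >= 0) by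
      (assert (H2 := Cmod_ge_0 (p2 w' - p2 w)%C); assert (H3 := Cmod_ge_0 (p3 w' - p3 w)%C); lra).
    lra.
  - intros w _ i. eexists. apply grad3_pd, grad3_p1.
Qed.

Lemma holo3_p2 r : holo3 p2 (polydisc r).
Proof.
  apply (holo3_of_lipschitz _ r 1 Rle_0_1).
  - intros w w' _ _. unfold dist3.
    assert (H1 := Cmod_ge_0 (p1 w' - p1 w)%C); assert (H3 := Cmod_ge_0 (p3 w' - p3 w)%C). lra.
  - intros w _ i. eexists. apply grad3_pd, grad3_p2.
Qed.

Definition restrict_t0 (F : C3 -> CC) (z : CC * CC) : CC := F (fst z, snd z, c0).

Definition vertical_difference (F : C3 -> CC) (w : C3) : CC :=
  (F w - restrict_t0 F (p1 w, p2 w))%C.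

Lemma vertical_difference_add (F : C3 -> CC) w :
  (vertical_difference F w + restrict_t0 F (p1 w, p2 w))%C = F w.
Proof. unfold vertical_difference. ring. Qed.

Lemma polydisc_t0 r z : disc2 r z -> polydisc r (fst z, snd z, c0).
Proof.
  intros (H1 & H2). unfold polydisc, p1, p2, p3; simpl. rewrite Cmod_c0.
  assert (H0 := Cmod_ge_0 (fst z)). repeat split; lra.
Qed.

Lemma near3_t0 d z z' : 0 < d -> near2 d z z' -> near3 d (fst z, snd z, c0) (fst z', snd z', c0).
Proof.
  intros Hd (H1 & H2). unfold near3, p1, p2, p3; simpl.
  replace (c0 - c0)%C with (RtoC 0) by ring. rewrite Cmod_0. repeat split; lra.
Qed.

Lemma holo2_restrict_t0 (F : C3 -> CC) r :
  holo3 F (polydisc r) -> holo2 (restrict_t0 F) (disc2 r).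
Proof.
  intros (_ & Hc & Hd). split; [apply open2_disc2 | split].
  - intros z Hz eps Heps. destruct (Hc _ (polydisc_t0 r z Hz) eps Heps) as [d [Hd0 Hnear]].
    exists d. split; [exact Hd0|]. intros z' Hz'. exact (Hnear _ (near3_t0 d z z' Hd0 Hz')).
  - intros z Hz. destruct (Hd _ (polydisc_t0 r z Hz)) as (l1 & l2 & l3 & H1 & H2 & _).
    exists l1, l2. split; assumption.
Qed.

Lemma holo3_vertical_difference (F : C3 -> CC) r :
  holo3 F (polydisc r) -> holo3 (vertical_difference F) (polydisc r).
Proof.
  intros (_ & Hc & Hd).
  assert (Hin : forall w, polydisc r w -> polydisc r (p1 w, p2 w, c0))
    by (intros w (H1 & H2 & _); exact (polydisc_t0 r (p1 w, p2 w) (conj H1 H2))).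
  split; [apply open3_polydisc | split].
  - intros w Hw eps Heps.
    destruct (Hc w Hw (eps / 2) ltac:(lra)) as [d1 [Hd1 N1]].
    destruct (Hc _ (Hin w Hw) (eps / 2) ltac:(lra)) as [d2 [Hd2 N2]].
    exists (Rmin d1 d2). split; [apply Rmin_pos; auto|].
    intros w' (A1 & A2 & A3). assert (E1 := Rmin_l d1 d2). assert (E2 := Rmin_r d1 d2).
    assert (B1 : Cmod (F w' - F w)%C < eps / 2) by (apply N1; repeat split; lra).
    assert (B2 := N2 _ (near3_t0 d2 (p1 w, p2 w) (p1 w', p2 w') Hd2
                          (conj (Rlt_le_trans _ _ _ A1 E2) (Rlt_le_trans _ _ _ A2 E2)))).
    unfold vertical_difference, restrict_t0. cbn [fst snd] in *.
    replace (F w' - F (p1 w', p2 w', c0) - (F w - F (p1 w, p2 w, c0)))%C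
      with ((F w' - F w) + - (F (p1 w', p2 w', c0) - F (p1 w, p2 w, c0)))%C by ring.
    eapply Rle_lt_trans; [apply Cmod_triangle|]. rewrite Cmod_opp. lra.
  - intros w Hw.
    destruct (Hd w Hw) as (l1 & l2 & l3 & H1 & H2 & H3).
    destruct (Hd _ (Hin w Hw)) as (l1' & l2' & _ & H1' & H2' & _).
    exists (l1 - l1')%C, (l2 - l2')%C, (l3 - 0)%C.
    split; [|split]; apply is_derive_C_minus; auto.
    apply is_derive_affine; intros; unfold restrict_t0, p1, p2; simpl; cring.
Qed.

Lemma Cmod_derivative_difference (A0 A1 B0 B1 D D0 h : C) X Rm :
  Cmod (A1 - A0 - h * D)%C <= Rm -> Cmod (B1 - B0 - h * D0)%C <= Rm ->
  Cmod (A1 - B1)%C <= X -> Cmod (A0 - B0)%C <= X -> Cmod h * Cmod (D - D0)%C <= 2 * X + 2 * Rm.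
Proof.
  intros H1 H2 H3 H4. rewrite <- Cmod_mult.
  replace (h * (D - D0))%C with
    ((A1 - B1) + - (A0 - B0) + - (A1 - A0 - h * D) + (B1 - B0 - h * D0))%C by ring.
  eapply Rle_trans; [apply Cmod_triangle|].
  eapply Rle_trans; [apply Rplus_le_compat_r, Cmod_triangle|].
  eapply Rle_trans; [apply Rplus_le_compat_r, Rplus_le_compat_r, Cmod_triangle|].
  rewrite !Cmod_opp. lra.
Qed.

Lemma small_steps rho K eps : 0 < rho -> 0 <= K -> 0 < eps ->
  exists hr del, 0 < hr <= rho / 4 /\ 0 < del <= rho / 4 /\
    2 * (K * (3 * del)) + 2 * (K * (hr * hr)) < eps * hr.
Proof.
  intros Hrho HK Heps.
  set (hr := Rmin (rho / 4) (eps / (4 * K + 1))).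
  assert (Hhr0 : 0 < hr) by (apply Rmin_pos; [lra | apply Rdiv_lt_0_compat; lra]).
  assert (Hhr1 : hr <= rho / 4) by apply Rmin_l.
  assert (Hhr2 := Rmult_le_of_le_div hr eps (4 * K + 1) ltac:(lra) (Rmin_r _ _)).
  set (del := Rmin (rho / 4) (eps * hr / (12 * K + 1))).
  assert (Hdel0 : 0 < del) by (apply Rmin_pos; [lra | apply Rdiv_lt_0_compat; nra]).
  assert (Hdel1 : del <= rho / 4) by apply Rmin_l.
  assert (Hdel2 := Rmult_le_of_le_div del (eps * hr) (12 * K + 1) ltac:(lra) (Rmin_r _ _)).
  exists hr, del. repeat split; try lra. nra.
Qed.

(** * Uniform first-order expansions in each variable *)

Definition first_order_on (G : C3 -> CC) (rho K : R) : Prop :=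
  forall i w, polydisc rho w ->
    exists l, first_order_at (fun s => G (set_coord i w s)) (coord i w) l rho K.

Section FirstOrderOn.

Variables (G : C3 -> CC) (rho K : R).
Hypotheses (rho_pos : 0 < rho) (K_ge0 : 0 <= K) (HG : first_order_on G rho K).

Lemma first_order_on_pd i w l : polydisc rho w -> pd i G w l ->
  first_order_at (fun s => G (set_coord i w s)) (coord i w) l rho K.
Proof.
  intros Hw Hl. destruct (HG i w Hw) as [l' Hl'].
  assert (E1 := is_C_derive_unique _ _ _ Hl).
  assert (E2 := is_C_derive_unique _ _ _ (first_order_at_is_derive _ _ _ _ _ rho_pos K_ge0 Hl')).
  replace l with l' by (etransitivity; [symmetry; exact E2 | exact E1]).
  exact Hl'.
Qed.

Lemma first_order_on_grad3 w : polydisc rho w -> exists l, grad3 G w l.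
Proof.
  intros Hw.
  destruct (HG ax1 w Hw) as [l1 H1], (HG ax2 w Hw) as [l2 H2], (HG ax3 w Hw) as [l3 H3].
  exists (l1, l2, l3).
  split; [|split]; eapply first_order_at_is_derive; eassumption.
Qed.

Lemma first_order_on_step i w s : polydisc rho w -> Cmod (s - coord i w)%C <= rho ->
  Cmod (G (set_coord i w s) - G w)%C <= K * Cmod (s - coord i w)%C.
Proof.
  intros Hw Hs. destruct (HG i w Hw) as [l Hl]. destruct (Hl _ Hs) as [A _].
  replace (coord i w + (s - coord i w))%C with s in A by ring.
  rewrite set_coord_coord in A. exact A.
Qed.

Lemma first_order_on_lipschitz w w' : polydisc (rho / 2) w -> polydisc (rho / 2) w' ->
  Cmod (G w' - G w)%C <= K * dist3 w w'.
Proof.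
  destruct w as [[u v] t], w' as [[u' v'] t'].
  unfold polydisc, dist3, p1, p2, p3; cbn [fst snd]. intros (Hu & Hv & Ht) (Hu' & Hv' & Ht').
  assert (Hd : forall x y : C, Cmod x < rho / 2 -> Cmod y < rho / 2 -> Cmod (y - x)%C <= rho).
  { intros x y Hx Hy. unfold Cminus. eapply Rle_trans; [apply Cmod_triangle|].
    rewrite Cmod_opp. lra. }
  assert (Hin : forall x y z : C, Cmod x < rho / 2 -> Cmod y < rho / 2 -> Cmod z < rho / 2 ->
            polydisc rho (x, y, z)) by (intros; unfold polydisc, p1, p2, p3; simpl; lra).
  assert (A := first_order_on_step ax1 (u, v, t) u' (Hin _ _ _ Hu Hv Ht) (Hd _ _ Hu Hu')).
  assert (B := first_order_on_step ax2 (u', v, t) v' (Hin _ _ _ Hu' Hv Ht) (Hd _ _ Hv Hv')).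
  assert (C := first_order_on_step ax3 (u', v', t) t' (Hin _ _ _ Hu' Hv' Ht) (Hd _ _ Ht Ht')).
  cbn [set_coord coord p1 p2 p3 fst snd] in A, B, C.
  replace (G (u', v', t') - G (u, v, t))%C with
    ((G (u', v', t') - G (u', v', t)) + (G (u', v', t) - G (u', v, t))
     + (G (u', v, t) - G (u, v, t)))%C by ring.
  eapply Rle_trans; [apply Cmod_triangle|].
  eapply Rle_trans; [apply Rplus_le_compat_r, Cmod_triangle|]. lra.
Qed.

Lemma first_order_on_holo3 : holo3 G (polydisc (rho / 2)).
Proof.
  apply (holo3_of_lipschitz G (rho / 2) K K_ge0 first_order_on_lipschitz).
  intros w Hw i. destruct (first_order_on_grad3 w) as [l Hl].
  - eapply polydisc_le; [|exact Hw]. lra.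
  - exists (coord i l). apply grad3_pd, Hl.
Qed.

Lemma first_order_on_pd_near i l0 : pd i G origin l0 -> forall eps, 0 < eps ->
  exists del, 0 < del <= rho / 4 /\
    forall w l, polydisc del w -> pd i G w l -> Cmod (l - l0)%C < eps.
Proof.
  intros Hl0 eps Heps.
  destruct (small_steps rho K eps rho_pos K_ge0 Heps) as (hr & del & Hhr & Hdel & Hsmall).
  exists del. split; [exact Hdel|]. intros w l Hw Hl.
  set (h0 := RtoC hr).
  assert (Hh0 : Cmod h0 = hr) by (unfold h0; rewrite Cmod_R; apply Rabs_pos_eq; lra).
  assert (F0 := first_order_on_pd i origin l0 (polydisc_origin rho rho_pos) Hl0 h0 ltac:(lra)).
  assert (Fw := first_order_on_pd i w l (polydisc_le del rho w ltac:(lra) Hw) Hl h0 ltac:(lra)).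
  assert (Hshift : forall w', polydisc del w' ->
            polydisc (rho / 2) (set_coord i w' (coord i w' + h0)%C)).
  { intros w' Hw'. apply polydisc_set_coord; [eapply polydisc_le; [|exact Hw']; lra|].
    eapply Rle_lt_trans; [apply Cmod_triangle|].
    assert (H := polydisc_coord del w' i Hw'). lra. }
  assert (Ho : polydisc del origin) by (apply polydisc_origin; lra).
  assert (Hdist := dist3_origin_le del w Hw).
  assert (L1 := first_order_on_lipschitz _ _ (Hshift origin Ho) (Hshift w Hw)).
  assert (L0 := first_order_on_lipschitz origin w
                  (polydisc_le del (rho / 2) _ ltac:(lra) Ho)
                  (polydisc_le del (rho / 2) _ ltac:(lra) Hw)).
  rewrite dist3_set_coord_shift in L1. cbv beta in Fw, F0. rewrite !set_coord_coord in Fw, F0.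
  assert (HX : K * dist3 origin w <= K * (3 * del)) by (apply Rmult_le_compat_l; lra).
  (* The increments of [G] over the step [h0] at [w] and at the origin differ by [O(|w|)]
     because [G] is Lipschitz, and each is linear in [h0] up to [O(hr^2)]. *)
  destruct Fw as [_ Rw], F0 as [_ R0]. rewrite Hh0 in Rw, R0.
  assert (E := Cmod_derivative_difference _ _ _ _ l l0 h0 _ _ Rw R0
                 (Rle_trans _ _ _ L1 HX) (Rle_trans _ _ _ L0 HX)).
  rewrite Hh0 in E. nra.
Qed.

Lemma first_order_on_smooth l0 : grad3 G origin l0 -> l0 <> origin -> smooth_near_origin G.
Proof.
  intros Hg Hl0.
  assert (Hi : exists i, coord i l0 <> c0).
  { destruct l0 as [[x y] z].
    destruct (Ceq_dec x c0) as [->|]; [|exists ax1; auto].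
    destruct (Ceq_dec y c0) as [->|]; [|exists ax2; auto].
    destruct (Ceq_dec z c0) as [->|]; [|exists ax3; auto].
    contradiction. }
  destruct Hi as [i Hi].
  destruct (first_order_on_pd_near i (coord i l0) (proj1 (grad3_pd _ _ _) Hg i)
              (Cmod (coord i l0)) (proj1 (Cmod_gt_0 _) Hi)) as (del & Hdel & Hnear).
  exists del. split; [lra|]. intros w Hw _.
  apply near3_origin_polydisc in Hw.
  destruct (first_order_on_grad3 w (polydisc_le del rho w ltac:(lra) Hw)) as [l Hl].
  exists l. split; [exact Hl|]. intros ->.
  specialize (Hnear w _ Hw (proj1 (grad3_pd _ _ _) Hl i)).
  replace (coord i origin) with c0 in Hnear by (destruct i; reflexivity).
  rewrite Cmod_c0_sub in Hnear. lra.
Qed.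

Lemma first_order_on_injective_t Dt0 : pd ax3 G origin Dt0 -> Dt0 <> c0 ->
  exists d, 0 < d <= rho / 4 /\ forall w t', polydisc d w -> Cmod t' < d ->
    G (p1 w, p2 w, t') = G w -> t' = p3 w.
Proof.
  intros HD HDnz. assert (HDpos : 0 < Cmod Dt0) by (apply Cmod_gt_0; exact HDnz).
  destruct (first_order_on_pd_near ax3 Dt0 HD (Cmod Dt0 / 2) ltac:(lra)) as (del & Hdel & Hnear).
  set (d := Rmin del (Cmod Dt0 / (4 * K + 1))).
  assert (Hd1 : d <= del) by apply Rmin_l.
  assert (Hd2 := Rmult_le_of_le_div d (Cmod Dt0) (4 * K + 1) ltac:(lra) (Rmin_r _ _)).
  assert (Hd0 : 0 < d) by (apply Rmin_pos; [lra | apply Rdiv_lt_0_compat; lra]).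
  exists d. split; [lra|]. intros w t' Hw Ht' E.
  assert (Hwr : polydisc rho w) by (eapply polydisc_le; [|exact Hw]; lra).
  destruct (first_order_on_grad3 w Hwr) as [l Hl].
  assert (Hl3 : pd ax3 G w (p3 l)) by exact (proj1 (grad3_pd _ _ _) Hl ax3).
  assert (Hclose := Hnear w (p3 l) (polydisc_le d del w Hd1 Hw) Hl3).
  assert (Hbig : Cmod Dt0 <= Cmod (p3 l) + Cmod (p3 l - Dt0)%C).
  { replace Dt0 with (p3 l + - (p3 l - Dt0))%C at 1 by ring.
    eapply Rle_trans; [apply Cmod_triangle | rewrite Cmod_opp; lra]. }
  assert (Hh : Cmod (t' - p3 w)%C < 2 * d).
  { unfold Cminus. eapply Rle_lt_trans; [apply Cmod_triangle|]. rewrite Cmod_opp.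
    assert (H := polydisc_coord d w ax3 Hw). simpl in H. lra. }
  assert (Hinj := first_order_at_injective _ _ _ _ _ (t' - p3 w)%C
                    (first_order_on_pd ax3 w (p3 l) Hwr Hl3) ltac:(lra)).
  cbn [set_coord coord] in Hinj.
  replace (p3 w + (t' - p3 w))%C with t' in Hinj by ring.
  assert (Ht0 : (t' - p3 w)%C = c0).
  { apply Hinj; [nra|]. etransitivity; [exact E|]. destruct w as [[u v] t]. reflexivity. }
  replace t' with (p3 w + (t' - p3 w))%C by ring. rewrite Ht0. unfold c0. ring.
Qed.

End FirstOrderOn.

(** * Transversality and straightening coordinates *)

Lemma transverse_at_origin_iff G l :
  grad3 G origin l -> (transverse_at_origin G <-> p1 l <> c0 \/ p2 l <> c0).
Proof.
  intros Hl. split.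
  - intros [l' [Hl' Hind]]. rewrite (grad3_unique _ _ _ _ Hl' Hl) in Hind.
    destruct (Ceq_dec (p1 l) c0) as [E1|E1]; [|left; exact E1].
    destruct (Ceq_dec (p2 l) c0) as [E2|E2]; [|right; exact E2].
    destruct (Hind (RtoC 1) (- p3 l)%C) as [F _].
    + rewrite E1. unfold c0. cring.
    + rewrite E2. unfold c0. cring.
    + unfold c0. cring.
    + apply RtoC_inj in F. lra.
  - intros Hnz. exists l. split; [exact Hl|]. intros al be H1 H2 H3.
    assert (Hal : al = c0).
    { destruct (Ceq_dec al c0) as [|Hal]; auto. exfalso.
      destruct Hnz as [N|N];
        [exact (Cmult_neq_0 _ _ Hal N H1) | exact (Cmult_neq_0 _ _ Hal N H2)]. }
    split; [exact Hal|]. rewrite <- H3, Hal. unfold c0. cring.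
Qed.

Section VerticalDifference.

Variables (G : C3 -> CC) (d : R).
Hypothesis injective_t : forall w t', polydisc d w -> Cmod t' < d ->
  G (p1 w, p2 w, t') = G w -> t' = p3 w.

Lemma vertical_difference_eq_c0 w : polydisc d w -> (p3 w = c0 <-> vertical_difference G w = c0).
Proof.
  intros Hw. unfold vertical_difference, restrict_t0. cbn [fst snd]. split.
  - intros E. replace (p1 w, p2 w, c0) with w by (destruct w as [[u v] t]; cbn in *; congruence).
    apply Csub_diag.
  - intros E. symmetry.
    apply injective_t; [exact Hw | rewrite Cmod_c0; exact (polydisc_pos d w Hw) |].
    symmetry. exact (Csub_eq_c0 _ _ E).
Qed.

Lemma vertical_chart_injective w w' : polydisc d w -> polydisc d w' ->
  (p1 w, p2 w, vertical_difference G w) = (p1 w', p2 w', vertical_difference G w') -> w = w'.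
Proof.
  destruct w as [[u v] t], w' as [[u' v'] t']. intros Hw (_ & _ & Ht') E.
  apply C3_eq_inv in E as (E1 & E2 & E3). cbn [p1 p2 p3 fst snd] in *. subst u' v'.
  unfold vertical_difference in E3. apply Csub_r_inj in E3.
  f_equal. symmetry. exact (injective_t (u, v, t) t' Hw Ht' (eq_sym E3)).
Qed.

End VerticalDifference.

Lemma grad3_vertical_difference_origin G Dt0 :
  pd3 G origin Dt0 -> grad3 (vertical_difference G) origin (RtoC 0, RtoC 0, Dt0).
Proof.
  intros Ht0. split; [|split].
  - apply is_derive_affine; intros.
    unfold vertical_difference, restrict_t0, origin; cbn [p1 p2 p3 fst snd]; cring.
  - apply is_derive_affine; intros.
    unfold vertical_difference, restrict_t0, origin; cbn [p1 p2 p3 fst snd]; cring.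
  - replace (p3 (RtoC 0, RtoC 0, Dt0)) with (Dt0 - 0)%C by (cbn [p3 snd]; cring).
    apply is_derive_C_minus; [exact Ht0|].
    apply is_derive_affine; intros. unfold restrict_t0, origin; cbn [p1 p2 p3 fst snd]; cring.
Qed.

Lemma good_coordinates_of_first_order a m q b1 b2 G rho K Dt0 :
  0 < rho -> 0 <= K -> first_order_on G rho K ->
  grad3 G origin (c0, c0, Dt0) -> Dt0 <> c0 -> G origin = c0 ->
  (forall u v, Cmod u < rho -> Cmod v < rho -> G (u, v, c0) = hom a m (chartpt q b1 b2 u v)) ->
  good_coordinates a m q b1 b2 G.
Proof.
  intros Hrho HK HG (Hu0 & Hv0 & Ht0) HDt HG0 HE0.
  destruct (first_order_on_injective_t G rho K Hrho HK HG Dt0 Ht0 HDt) as (d & Hd & Hinj).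
  assert (HGd : holo3 G (polydisc d)) by
    (apply (holo3_polydisc_le G (rho / 2));
     [lra | exact (first_order_on_holo3 G rho K Hrho HK HG)]).
  exists (polydisc d), p1, p2, (vertical_difference G), (restrict_t0 G), (disc2 d),
    (fun _ => RtoC 1), (RtoC 1, RtoC 0, RtoC 0), (RtoC 0, RtoC 1, RtoC 0), (RtoC 0, RtoC 0, Dt0).
  repeat match goal with |- _ /\ _ => split end.
  - apply polydisc_origin; lra.
  - apply holo3_p1.
  - apply holo3_p2.
  - apply holo3_vertical_difference, HGd.
  - exact (vertical_chart_injective G d Hinj).
  - apply grad3_p1.
  - apply grad3_p2.
  - exact (grad3_vertical_difference_origin G Dt0 Ht0).
  - unfold det3. cbn [p1 p2 p3 fst snd]. replace (_ + _)%C with Dt0 by cring. exact HDt.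
  - reflexivity.
  - reflexivity.
  - apply Csub_diag.
  - exact (vertical_difference_eq_c0 G d Hinj).
  - apply holo2_restrict_t0, HGd.
  - intros w (H1 & H2 & _). split; assumption.
  - intros w _. rewrite <- (vertical_difference_add G w) at 1.
    split; intros E; [rewrite E | rewrite <- E]; cring.
  - apply holo3_const.
  - intros w _ E. apply RtoC_inj in E. lra.
  - intros w (H1 & H2 & _) _. unfold restrict_t0; cbn [fst snd]. rewrite HE0 by lra. cring.
  - exact HG0.
  - exact Hu0.
  - exact Hv0.
Qed.

(** * The strict transform in the blow-up chart *)

Lemma chartpt_origin q b1 b2 : chartpt q b1 b2 c0 c0 = q.
Proof. destruct q as [[x y] z]. unfold chartpt. cbn [p1 p2 p3 fst snd]. apply C3_eq; cring. Qed.

Lemma chartpt_shift1 q b1 b2 u v h :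
  chartpt q b1 b2 (u + h)%C v = shift3 (chartpt q b1 b2 u v) h b1.
Proof. unfold chartpt, shift3. cbn [p1 p2 p3 fst snd]. apply C3_eq; cring. Qed.

Lemma chartpt_shift2 q b1 b2 u v h :
  chartpt q b1 b2 u (v + h)%C = shift3 (chartpt q b1 b2 u v) h b2.
Proof. unfold chartpt, shift3. cbn [p1 p2 p3 fst snd]. apply C3_eq; cring. Qed.

Definition basis_bound (q b1 b2 : C3) : R :=
  1 + Cmod (p1 q) + Cmod (p2 q) + Cmod (p3 q) + Cmod (p1 b1) + Cmod (p2 b1) + Cmod (p3 b1)
    + Cmod (p1 b2) + Cmod (p2 b2) + Cmod (p3 b2).

Lemma basis_bound_spec q b1 b2 :
  1 <= basis_bound q b1 b2 /\ coords_le (basis_bound q b1 b2) q /\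
  coords_le (basis_bound q b1 b2) b1 /\ coords_le (basis_bound q b1 b2) b2.
Proof.
  unfold basis_bound, coords_le.
  pose proof (Cmod_ge_0 (p1 q)). pose proof (Cmod_ge_0 (p2 q)). pose proof (Cmod_ge_0 (p3 q)).
  pose proof (Cmod_ge_0 (p1 b1)). pose proof (Cmod_ge_0 (p2 b1)). pose proof (Cmod_ge_0 (p3 b1)).
  pose proof (Cmod_ge_0 (p1 b2)). pose proof (Cmod_ge_0 (p2 b2)). pose proof (Cmod_ge_0 (p3 b2)).
  repeat split; lra.
Qed.

Lemma basis_bound_ge1 q b1 b2 : 1 <= basis_bound q b1 b2.
Proof. apply basis_bound_spec. Qed.

Lemma chartpt_bound q b1 b2 u v : Cmod u <= 1 -> Cmod v <= 1 ->
  coords_le (3 * basis_bound q b1 b2) (chartpt q b1 b2 u v).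
Proof.
  intros Hu Hv.
  destruct (basis_bound_spec q b1 b2) as (H0 & (Q1 & Q2 & Q3) & (A1 & A2 & A3) & (B1 & B2 & B3)).
  set (N := basis_bound q b1 b2) in *.
  assert (Hc : forall x y z : C, Cmod x <= N -> Cmod y <= N -> Cmod z <= N ->
             Cmod (x + u * y + v * z)%C <= 3 * N).
  { intros x y z Hx Hy Hz.
    assert (Cmod (u * y)%C <= 1 * N) by (apply Cmod_mult_le; auto).
    assert (Cmod (v * z)%C <= 1 * N) by (apply Cmod_mult_le; auto).
    eapply Rle_trans; [apply Cmod_triangle|].
    eapply Rle_trans; [apply Rplus_le_compat_r, Cmod_triangle|]. lra. }
  unfold chartpt, coords_le. cbn [p1 p2 p3 fst snd]. repeat split; apply Hc; assumption.
Qed.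

Section StrictTransform.

Variables (a : coeffs) (m : nat) (q b1 b2 : C3) (G : C3 -> CC) (r R0 B rho : R).

Let N := basis_bound q b1 b2.
Let S := 3 * N.

Hypothesis series_G : forall u v t, Cmod u < r -> Cmod v < r -> Cmod t < r ->
  is_series (fun k => pow_n t k * hom a (m + k) (chartpt q b1 b2 u v))%C (G (u, v, t)).
Hypotheses (R0_pos : 0 < R0) (coef_bound : forall n, coef_mass a n * R0 ^ n <= B).
Hypotheses (rho_pos : 0 < rho) (rho_le_half : rho <= 1 / 2) (rho_le_r : 2 * rho <= r)
           (rho_le_R0 : 6 * S * rho <= R0).

Definition st_term (w : C3) (k : nat) : C :=
  (pow_n (p3 w) k * hom a (m + k) (chartpt q b1 b2 (p1 w) (p2 w)))%C.

Definition st_dterm (i : axis) (w : C3) (k : nat) : C :=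
  match i with
  | ax1 => pow_n (p3 w) k * dhom a (m + k) (chartpt q b1 b2 (p1 w) (p2 w)) b1
  | ax2 => pow_n (p3 w) k * dhom a (m + k) (chartpt q b1 b2 (p1 w) (p2 w)) b2
  | ax3 => RtoC (INR k) * pow_n (p3 w) (k - 1) * hom a (m + k) (chartpt q b1 b2 (p1 w) (p2 w))
  end%C.

(* [st_majorant k] dominates the first-order increments of the [k]-th term in each of the
   three variables; it is summable because [6 S rho <= R0]. *)
Definition st_majorant (k : nat) : R :=
  2 ^ (m + k) * (2 * rho) ^ k * coef_mass a (m + k) * S ^ (m + k).

Lemma st_majorant_ge0 k : 0 <= st_majorant k.
Proof.
  assert (HN : 1 <= N) by apply basis_bound_ge1. unfold st_majorant, S.
  repeat apply Rmult_le_pos; try apply pow_le; try lra. apply coef_mass_ge0.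
Qed.

Lemma ex_series_st_majorant : ex_series st_majorant.
Proof.
  assert (HN : 1 <= N) by apply basis_bound_ge1.
  apply ex_series_geom_le with (C0 := B * (2 * S / R0) ^ m) (q := 2 * 2 * S * rho / R0).
  - split; [apply Rmult_le_pos; [unfold S; nra | apply Rlt_le, Rinv_0_lt_compat; lra]|].
    apply (Rmult_lt_reg_r R0); auto. unfold Rdiv. rewrite Rmult_assoc, Rinv_l; lra.
  - intro k. split; [apply st_majorant_ge0|].
    assert (HA := coef_bound (m + k)). assert (HR : 0 < R0 ^ (m + k)) by (apply pow_lt; lra).
    assert (HA' : coef_mass a (m + k) <= B / R0 ^ (m + k)).
    { apply (Rmult_le_reg_r (R0 ^ (m + k))); auto. unfold Rdiv.
      rewrite Rmult_assoc, Rinv_l; lra. }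
    unfold st_majorant.
    eapply Rle_trans.
    { apply Rmult_le_compat_r; [apply pow_le; unfold S; lra|].
      apply Rmult_le_compat_l; [apply Rmult_le_pos; apply pow_le; lra | exact HA']. }
    right. unfold Rdiv. rewrite !Rpow_mult_distr, !pow_add, !pow_inv.
    field. repeat split; apply pow_nonzero; lra.
Qed.

Lemma st_majorant_ge k g M :
  1 <= g <= 2 ^ (m + k) -> 0 <= M <= (2 * rho) ^ k * (coef_mass a (m + k) * S ^ (m + k)) ->
  (g - 1) * M <= st_majorant k.
Proof.
  intros Hg HM. unfold st_majorant.
  assert ((g - 1) * M <= 2 ^ (m + k) * ((2 * rho) ^ k * (coef_mass a (m + k) * S ^ (m + k))))
    by (apply Rmult_le_compat; lra).
  lra.
Qed.

Lemma st_increment_chart p b h t k :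
  coords_le S p -> coords_le S (shift3 p h b) -> coords_le N b -> Cmod t <= rho -> Cmod h <= rho ->
  Cmod (pow_n t k * hom a (m + k) (shift3 p h b) - pow_n t k * hom a (m + k) p)%C
    <= st_majorant k * (Cmod h / rho) /\
  Cmod (pow_n t k * hom a (m + k) (shift3 p h b) - pow_n t k * hom a (m + k) p
        - h * (pow_n t k * dhom a (m + k) p b))%C
    <= st_majorant k * ((Cmod h / rho) * (Cmod h / rho)).
Proof.
  intros Hp Hph Hb Ht Hh. assert (HN : 1 <= N) by apply basis_bound_ge1.
  set (x := Cmod h / rho).
  assert (Hx : Cmod h <= x).
  { unfold x, Rdiv. rewrite <- (Rmult_1_r (Cmod h)) at 1.
    apply Rmult_le_compat_l; [apply Cmod_ge_0|]. rewrite <- Rinv_1.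
    apply Rinv_le_contravar; lra. }
  assert (Hx0 : 0 <= x) by (eapply Rle_trans; [apply Cmod_ge_0 | exact Hx]).
  assert (Hstep : N * Cmod h <= (2 - 1) * S * x)
    by (unfold S; assert (H0 := Cmod_ge_0 h); nra).
  assert (HP := taylor1_bound_hom h x 2 S N p b Hx0 ltac:(lra) Hp Hph Hb Hstep a (m + k)).
  apply (taylor1_bound_scal _ _ (pow_n t k)) in HP; [|apply pow_R1_Rle; lra].
  apply (taylor1_bound_increments _ _ _ _ _ _ _ _ HP Hx0), st_majorant_ge;
    [split; [apply pow_R1_Rle; lra | apply Rle_refl]|].
  rewrite Cmod_pow_n. split.
  - apply Rmult_le_pos; [apply pow_le, Cmod_ge_0|].
    apply Rmult_le_pos; [apply coef_mass_ge0 | apply pow_le; unfold S; lra].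
  - apply Rmult_le_compat_r.
    + apply Rmult_le_pos; [apply coef_mass_ge0 | apply pow_le; unfold S; lra].
    + apply pow_incr. split; [apply Cmod_ge_0 | lra].
Qed.

Lemma st_increment_t p t h k :
  coords_le S p -> Cmod t <= rho -> Cmod h <= rho ->
  Cmod (pow_n (t + h) k * hom a (m + k) p - pow_n t k * hom a (m + k) p)%C
    <= st_majorant k * (Cmod h / rho) /\
  Cmod (pow_n (t + h) k * hom a (m + k) p - pow_n t k * hom a (m + k) p
        - h * (RtoC (INR k) * pow_n t (k - 1) * hom a (m + k) p))%C
    <= st_majorant k * ((Cmod h / rho) * (Cmod h / rho)).
Proof.
  intros Hp Ht Hh.
  set (x := Cmod h / rho). set (c := hom a (m + k) p).
  assert (Hx0 : 0 <= x)
    by (apply Rmult_le_pos; [apply Cmod_ge_0 | apply Rlt_le, Rinv_0_lt_compat; lra]).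
  assert (Hc := hom_bound a (m + k) p S Hp). fold c in Hc.
  assert (Hth : Cmod (t + h * RtoC 1)%C <= 2 * rho).
  { rewrite Cmult_1_r. eapply Rle_trans; [apply Cmod_triangle | lra]. }
  assert (Hstep : 1 * Cmod h <= (2 - 1) * (2 * rho) * x).
  { replace ((2 - 1) * (2 * rho) * x) with (2 * Cmod h) by (unfold x; field; lra).
    assert (H0 := Cmod_ge_0 h). lra. }
  assert (HP := taylor1_bound_affine h x Hx0 t (RtoC 1) (2 * rho) 2 1 ltac:(lra) Hth
                  ltac:(rewrite Cmod_1; lra) Hstep).
  apply (taylor1_bound_pow _ _ Hx0 _ _ _ (2 * rho) 2 k ltac:(lra)) in HP.
  apply (taylor1_bound_scal _ _ c) in HP; [|apply pow_R1_Rle; lra].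
  rewrite !Cmult_1_r in HP.
  destruct (taylor1_bound_increments _ _ _ _ _ _ _ (st_majorant k) HP Hx0) as [A1 A2].
  { apply st_majorant_ge.
    - assert (1 <= 2 ^ m) by (apply pow_R1_Rle; lra).
      assert (1 <= 2 ^ k) by (apply pow_R1_Rle; lra).
      rewrite pow_add. split; nra.
    - split; [apply Rmult_le_pos; [apply Cmod_ge_0 | apply pow_le; lra]|].
      rewrite Rmult_comm. apply Rmult_le_compat_l; [apply pow_le; lra | exact Hc]. }
  split.
  - replace (pow_n (t + h) k * c - pow_n t k * c)%C
      with (c * pow_n (t + h) k - c * pow_n t k)%C by cring. exact A1.
  - replace (pow_n (t + h) k * c - pow_n t k * c - h * (RtoC (INR k) * pow_n t (k - 1) * c))%C
      with (c * pow_n (t + h) k - c * pow_n t k - h * (c * (RtoC (INR k) * pow_n t (k - 1))))%C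
      by cring.
    exact A2.
Qed.

Lemma st_series w : polydisc r w -> is_series (st_term w) (G w).
Proof. destruct w as [[u v] t]. intros (Hu & Hv & Ht). exact (series_G u v t Hu Hv Ht). Qed.

Lemma st_term_increment i w h : polydisc rho w -> Cmod h <= rho -> forall k,
  Cmod (st_term (set_coord i w (coord i w + h)%C) k - st_term w k)%C
    <= st_majorant k * (Cmod h / rho) /\
  Cmod (st_term (set_coord i w (coord i w + h)%C) k - st_term w k - h * st_dterm i w k)%C
    <= st_majorant k * ((Cmod h / rho) * (Cmod h / rho)).
Proof.
  destruct w as [[u v] t]. unfold polydisc, p1, p2, p3; cbn [fst snd].
  intros (Hu & Hv & Ht) Hh k.
  destruct (basis_bound_spec q b1 b2) as (_ & _ & Hb1 & Hb2).
  assert (Hp := chartpt_bound q b1 b2 u v ltac:(lra) ltac:(lra)).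
  assert (Huh : Cmod (u + h)%C <= 1) by (eapply Rle_trans; [apply Cmod_triangle | lra]).
  assert (Hvh : Cmod (v + h)%C <= 1) by (eapply Rle_trans; [apply Cmod_triangle | lra]).
  destruct i; unfold st_term, st_dterm; cbn [set_coord coord p1 p2 p3 fst snd].
  - rewrite chartpt_shift1. apply st_increment_chart; try (exact Hp || exact Hb1 || lra).
    rewrite <- chartpt_shift1. apply chartpt_bound; lra.
  - rewrite chartpt_shift2. apply st_increment_chart; try (exact Hp || exact Hb2 || lra).
    rewrite <- chartpt_shift2. apply chartpt_bound; lra.
  - apply st_increment_t; [exact Hp | lra | lra].
Qed.

Definition st_constant : R := Series st_majorant / rho + Series st_majorant / (rho * rho).

Lemma st_constant_ge0 : 0 <= st_constant.
Proof.
  assert (H := is_series_ge0 _ _ (Series_correct _ ex_series_st_majorant) st_majorant_ge0).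
  unfold st_constant. apply Rplus_le_le_0_compat; apply Rmult_le_pos;
    try apply Rlt_le, Rinv_0_lt_compat; nra.
Qed.

Lemma strict_transform_first_order i w : polydisc rho w ->
  exists l, is_series (st_dterm i w) l /\
    first_order_at (fun s => G (set_coord i w s)) (coord i w) l rho st_constant.
Proof.
  intros Hw. assert (Hwr : polydisc r w) by (eapply polydisc_le; [|exact Hw]; lra).
  apply (first_order_at_of_series _ (fun s => st_term (set_coord i w s)) _ st_majorant _ _ _
           rho_pos (Series_correct _ ex_series_st_majorant) st_majorant_ge0).
  - intros h Hh. apply (st_series (set_coord i w (coord i w + h)%C)).
    apply polydisc_set_coord; [exact Hwr|].
    assert (H := polydisc_coord rho w i Hw).
    eapply Rle_lt_trans; [apply Cmod_triangle | lra].
  - rewrite set_coord_coord. exact (st_series w Hwr).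
  - intros h Hh. rewrite set_coord_coord. apply st_term_increment; assumption.
Qed.

Lemma strict_transform_first_order_on : first_order_on G rho st_constant.
Proof.
  intros i w Hw. destruct (strict_transform_first_order i w Hw) as (l & _ & Hl). exists l. exact Hl.
Qed.

Lemma strict_transform_grad_origin :
  grad3 G origin (dhom a m q b1, dhom a m q b2, hom a (m + 1) q).
Proof.
  apply grad3_pd. intros i.
  destruct (strict_transform_first_order i origin (polydisc_origin rho rho_pos)) as (l & Hl & Hf).
  replace (coord i _) with l;
    [exact (first_order_at_is_derive _ _ _ _ _ rho_pos st_constant_ge0 Hf)|].
  unfold st_dterm, origin in Hl. cbn [p1 p2 p3 fst snd] in Hl. rewrite chartpt_origin in Hl.
  destruct i; cbn [coord p1 p2 p3 fst snd]; apply (is_series_C_unique _ _ _ Hl).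
  - rewrite <- (Nat.add_0_r m) at 1. apply (is_series_pow0 (fun k => dhom a (m + k) q b1)).
  - rewrite <- (Nat.add_0_r m) at 1. apply (is_series_pow0 (fun k => dhom a (m + k) q b2)).
  - apply (is_series_dpow0 (fun k => hom a (m + k) q)).
Qed.

Lemma strict_transform_on_E0 u v : Cmod u < rho -> Cmod v < rho ->
  G (u, v, c0) = hom a m (chartpt q b1 b2 u v).
Proof.
  intros Hu Hv.
  apply (is_series_C_unique (fun k => pow_n c0 k * hom a (m + k) (chartpt q b1 b2 u v))%C).
  - apply series_G; try lra. rewrite Cmod_c0. lra.
  - rewrite <- (Nat.add_0_r m) at 1.
    apply (is_series_pow0 (fun k => hom a (m + k) (chartpt q b1 b2 u v))).
Qed.

End StrictTransform.

Lemma strict_transform_first_order_data a m q b1 b2 G :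
  convergent a -> strict_transform_eq a m q b1 b2 G ->
  exists rho K, 0 < rho /\ 0 <= K /\ first_order_on G rho K /\
    grad3 G origin (dhom a m q b1, dhom a m q b2, hom a (m + 1) q) /\
    forall u v, Cmod u < rho -> Cmod v < rho -> G (u, v, c0) = hom a m (chartpt q b1 b2 u v).
Proof.
  intros Hconv [r [Hr HG]].
  destruct (convergent_coef_mass_bound a Hconv) as (R0 & B & HR0 & HB).
  set (S := 3 * basis_bound q b1 b2).
  assert (HS : 3 <= S) by (unfold S; destruct (basis_bound_spec q b1 b2); lra).
  set (rho := Rmin (Rmin (r / 2) (1 / 2)) (R0 / (6 * S))).
  assert (Hrho0 : 0 < rho) by (repeat apply Rmin_pos; try apply Rdiv_lt_0_compat; lra).
  assert (Hrho1 : rho <= Rmin (r / 2) (1 / 2)) by apply Rmin_l.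
  assert (Hrho2 := Rmin_l (r / 2) (1 / 2)). assert (Hrho3 := Rmin_r (r / 2) (1 / 2)).
  assert (Hrho4 : rho * (6 * S) <= R0) by (apply Rmult_le_of_le_div; [lra | apply Rmin_r]).
  exists rho, (st_constant a m q b1 b2 rho).
  repeat match goal with |- _ /\ _ => split end.
  - exact Hrho0.
  - apply (st_constant_ge0 a m q b1 b2 R0 B rho); auto; unfold S in Hrho4; lra.
  - apply (strict_transform_first_order_on a m q b1 b2 G r R0 B rho); auto; unfold S in Hrho4; lra.
  - apply (strict_transform_grad_origin a m q b1 b2 G r R0 B rho); auto; unfold S in Hrho4; lra.
  - intros u v Hu Hv. apply (strict_transform_on_E0 a m q b1 b2 G r rho); auto; lra.
Qed.

(** * Singular points of [C] *)

Lemma det3_origin_l b1 b2 : det3 origin b1 b2 = c0.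
Proof. unfold det3, origin. cbn [p1 p2 p3 fst snd]. cring. Qed.

Lemma det3_kernel (q b1 b2 : C3) (x y z : CC) : det3 q b1 b2 <> c0 ->
  (p1 q * x + p2 q * y + p3 q * z)%C = c0 ->
  (p1 b1 * x + p2 b1 * y + p3 b1 * z)%C = c0 ->
  (p1 b2 * x + p2 b2 * y + p3 b2 * z)%C = c0 ->
  x = c0 /\ y = c0 /\ z = c0.
Proof.
  intros Hd H0 H1 H2. set (L0 := (p1 q * x + p2 q * y + p3 q * z)%C) in H0.
  set (L1 := (p1 b1 * x + p2 b1 * y + p3 b1 * z)%C) in H1.
  set (L2 := (p1 b2 * x + p2 b2 * y + p3 b2 * z)%C) in H2.
  split; [|split]; apply (Cmult_eq_c0_r (det3 q b1 b2)); auto.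
  - transitivity (L0 * (p2 b1 * p3 b2 - p3 b1 * p2 b2) - L1 * (p2 q * p3 b2 - p3 q * p2 b2)
                  + L2 * (p2 q * p3 b1 - p3 q * p2 b1))%C; [unfold L0, L1, L2, det3; cring|].
    rewrite H0, H1, H2. cring.
  - transitivity (- L0 * (p1 b1 * p3 b2 - p3 b1 * p1 b2) + L1 * (p1 q * p3 b2 - p3 q * p1 b2)
                  - L2 * (p1 q * p3 b1 - p3 q * p1 b1))%C; [unfold L0, L1, L2, det3; cring|].
    rewrite H0, H1, H2. cring.
  - transitivity (L0 * (p1 b1 * p2 b2 - p2 b1 * p1 b2) - L1 * (p1 q * p2 b2 - p2 q * p1 b2)
                  + L2 * (p1 q * p2 b1 - p2 q * p1 b1))%C; [unfold L0, L1, L2, det3; cring|].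
    rewrite H0, H1, H2. cring.
Qed.

Lemma sing_pt_dhom a m q b : sing_pt a m q -> dhom a m q b = c0.
Proof. intros (_ & Hx & Hy & Hz). rewrite dhom_grad, Hx, Hy, Hz. cring. Qed.

(* Euler's identity [q . grad f_m(q) = m f_m(q) = 0] supplies the third equation. *)
Lemma not_sing_pt_dhom a m q b1 b2 : det3 q b1 b2 <> c0 -> hom a m q = c0 ->
  ~ sing_pt a m q -> dhom a m q b1 <> c0 \/ dhom a m q b2 <> c0.
Proof.
  intros Hdet Hq Hns.
  destruct (Ceq_dec (dhom a m q b1) c0) as [E1|E1]; [|left; exact E1].
  destruct (Ceq_dec (dhom a m q b2) c0) as [E2|E2]; [|right; exact E2].
  exfalso. apply Hns.
  assert (E0 : dhom a m q q = c0) by (rewrite euler_hom, Hq; cring).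
  rewrite dhom_grad in E0, E1, E2.
  destruct (det3_kernel q b1 b2 _ _ _ Hdet E0 E1 E2) as (Hx & Hy & Hz).
  repeat split; assumption.
Qed.

Theorem lemma2p1 (a : coeffs) (m : nat) (q b1 b2 : C3) (G : C3 -> CC) :
  convergent a ->
  order_is a m ->
  (forall w : C3, w <> origin -> sing_pt a m w -> hom a (m + 1) w <> c0) ->
  det3 q b1 b2 <> c0 ->
  hom a m q = c0 ->
  strict_transform_eq a m q b1 b2 G ->
  smooth_near_origin G /\
  (transverse_at_origin G <-> ~ sing_pt a m q) /\
  (sing_pt a m q -> good_coordinates a m q b1 b2 G).
Proof.
  intros Hconv _ Hsing Hdet Hq Hst.
  destruct (strict_transform_first_order_data a m q b1 b2 G Hconv Hst)
    as (rho & K & Hrho & HK & HG & Hgrad & HE0).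
  assert (Hq0 : q <> origin) by (intros ->; apply Hdet, det3_origin_l).
  split; [|split].
  - apply (first_order_on_smooth G rho K Hrho HK HG _ Hgrad). intros E.
    apply C3_eq_inv in E as (E1 & E2 & E3).
    destruct (classic (sing_pt a m q)) as [Hs|Hns].
    + exact (Hsing q Hq0 Hs E3).
    + destruct (not_sing_pt_dhom a m q b1 b2 Hdet Hq Hns); contradiction.
  - rewrite (transverse_at_origin_iff G _ Hgrad). cbn [p1 p2 fst snd]. split.
    + intros Hnz Hs. destruct Hnz as [H|H]; apply H, sing_pt_dhom, Hs.
    + apply not_sing_pt_dhom; assumption.
  - intros Hs. rewrite !(sing_pt_dhom a m q _ Hs) in Hgrad.
    apply (good_coordinates_of_first_order a m q b1 b2 G rho K (hom a (m + 1) q)); auto.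
    change origin with (c0, c0, c0). rewrite HE0 by (rewrite Cmod_c0; lra).
    rewrite chartpt_origin. exact Hq.
Qed.
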